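(* Let $X$ have a pdf $f$ satisfying Conditions (A) and (B) below, and fix the zero-wait sampler. For $\delta>0$ let $D_\delta=D(Q_{\mathrm{uni}}^\delta)$. Then the uniform quantizer is asymptotically optimal: $$\lim_{\delta\to0}\Big[\mathrm{AoI}(S_{\mathrm z},Q_{\mathrm{uni}}^\delta,F^* )-\inf_{Q:\,D(Q)\le D_\delta}\mathrm{AoI}(S_{\mathrm z},Q,F^* )\Big]=0.$$
   Context: Let $X$ be a real random variable with pdf $f$. Condition (A): $f$ is continuous and differentiable, and its support is a bounded interval $I$. Condition (B): $\int_I f\log_2^2 f\,dx$ and $-\int_I f\log_2 f\,dx$ exist and are finite. Quantizers. A quantizer $Q$ partitions $I$ into intervals $[a_{i-1},a_i]$ with representation points $c_i$. Write $p_i=P(X\in[a_{i-1},a_i])$. The mean-squared distortion is $D(Q)=\sum_i\int_{a_{i-1}}^{a_i}(x-c_i)^2f(x)\,dx$. The uniform quantizer $Q_{\mathrm{uni}}^\delta$ partitions $I$ into consecutive cells of length $\delta$, with midpoint representation points. Codes. A real-valued code assigns lengths $l_i\in\mathbb R^+$ to the cells, subject to $\sum_i2^{-l_i}\le1$. The random codeword length is $L=l_i$ when $X$ is in cell $i$. Objective. Under the zero-wait sampler $S_{\mathrm z}$, the AoI is $\mathrm{AoI}(S_{\mathrm z},Q,l)=\frac{E[L^2]}{2E[L]}+E[L]$. We write $\mathrm{AoI}(S_{\mathrm z},Q,F^* )=\inf_l \mathrm{AoI}(S_{\mathrm z},Q,l)$, the infimum over real-valued codes for $Q$. *)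

From Stdlib Require Import Reals ZArith.
From Coquelicot Require Import Coquelicot.
Open Scope R_scope.

Fixpoint rsum (n : nat) (g : nat -> R) : R :=
  match n with O => 0 | S m => rsum m g + g m end.

Definition log2 (x : R) : R := ln x / ln 2.

Definition in_support (f : R -> R) (x : R) : Prop :=
  forall eps : R, 0 < eps -> exists y, Rabs (y - x) < eps /\ f y <> 0.

Definition pdf_on (f : R -> R) (a b : R) : Prop :=
  a < b /\ (forall x, 0 <= f x) /\
  (forall x, in_support f x <-> a <= x <= b) /\
  ex_RInt f a b /\ RInt f a b = 1.

Definition condA (f : R -> R) (a b : R) : Prop :=
  (forall x, a <= x <= b ->
     filterlim f (within (fun y => a <= y <= b) (locally x)) (locally (f x))) /\
  (forall x, a < x < b -> ex_derive f x).

(* Condition (B): the integrals of f log2^2 f and - f log2 f over I exist and are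
   finite (convention: Stdlib ln 0 = 0, so 0 log 0 = 0). *)
Definition condB (f : R -> R) (a b : R) : Prop :=
  ex_RInt (fun x => f x * (log2 (f x)) ^ 2) a b /\
  ex_RInt (fun x => - (f x * log2 (f x))) a b.

(* A quantizer with qn cells: cell i (i < qn) is [qa i, qa (i+1)],
   with representation point qc i. *)
Record quantizer := Quantizer { qn : nat; qa : nat -> R; qc : nat -> R }.

Definition is_quantizer (a b : R) (Q : quantizer) : Prop :=
  (1 <= qn Q)%nat /\ qa Q 0 = a /\ qa Q (qn Q) = b /\
  (forall i, (i < qn Q)%nat -> qa Q i < qa Q (S i)).

Definition cellp (f : R -> R) (Q : quantizer) (i : nat) : R :=
  RInt f (qa Q i) (qa Q (S i)).

Definition distortion (f : R -> R) (Q : quantizer) : R :=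
  rsum (qn Q) (fun i => RInt (fun x => (x - qc Q i) ^ 2 * f x) (qa Q i) (qa Q (S i))).

(* real-valued code: positive lengths satisfying Kraft's inequality *)
Definition is_code (Q : quantizer) (l : nat -> R) : Prop :=
  (forall i, (i < qn Q)%nat -> 0 < l i) /\
  rsum (qn Q) (fun i => Rpower 2 (- l i)) <= 1.

Definition EL (f : R -> R) (Q : quantizer) (l : nat -> R) : R :=
  rsum (qn Q) (fun i => cellp f Q i * l i).
Definition EL2 (f : R -> R) (Q : quantizer) (l : nat -> R) : R :=
  rsum (qn Q) (fun i => cellp f Q i * l i ^ 2).

Definition AoI_zw (f : R -> R) (Q : quantizer) (l : nat -> R) : R :=
  EL2 f Q l / (2 * EL f Q l) + EL f Q l.

(* AoI(S_z, Q, F^* ) : infimum over real-valued codes *)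
Definition AoI_opt (f : R -> R) (Q : quantizer) : R :=
  real (Glb_Rbar (fun y => exists l, is_code Q l /\ y = AoI_zw f Q l)).

Definition AoI_best (f : R -> R) (a b D : R) : R :=
  real (Glb_Rbar (fun y => exists Q, is_quantizer a b Q /\ distortion f Q <= D /\
                                    y = AoI_opt f Q)).

(* ceiling *)
Definition ceil_nat (x : R) : nat := Z.to_nat (1 - up (- x)).

Definition uni_quantizer (a b delta : R) : quantizer :=
  let bp := fun i : nat => Rmin (a + INR i * delta) b in
  Quantizer (ceil_nat ((b - a) / delta)) bp (fun i => (bp i + bp (S i)) / 2).

From Stdlib Require Import Reals Lra Lia ZArith.
From Coquelicot Require Import Coquelicot.
Open Scope R_scope.

(* Write [H] for the entropy (in nats) of the cell probabilities of a quantizer,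
   [h] for the differential entropy of [f] and [D] for the distortion.

   Codes: by Kraft's and Gibbs' inequalities [E L >= H / ln 2], and [E (L^2) >= (E L)^2],
   so the zero-wait AoI of any code is at least [3/2 H / ln 2].  The Shannon code
   [l_i = - log2 p_i] attains [3/2 H / ln 2 + Var (ln p) / (2 H ln 2)], and for the
   uniform quantizer of step [delta] the variance stays bounded while [H -> +oo].

   Quantizers: on each cell, Gibbs' inequality against a Cauchy density of scale
   [1 / sqrt lam] (or a direct computation where [f] is nearly constant) shows
   [H + lam D >= h + 1/2 ln (lam / 6) + 1/2 - eps] for every quantizer of small
   distortion, uniformly in [lam].  The uniform quantizer has [H ~ h - ln delta] and
   [D ~ delta^2 / 12], so taking [lam = 6 / delta^2], no quantizer with at most its
   distortion has entropy below [H (Q_uni) - o(1)].  Hence both AoI values are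
   [3/2 H (Q_uni) / ln 2 + o(1)]. *)

Lemma rsum_ext n g h : (forall i, (i < n)%nat -> g i = h i) -> rsum n g = rsum n h.
Proof.
  induction n as [|n IH]; intros E; simpl; [reflexivity|].
  rewrite (E n) by lia. rewrite IH; [reflexivity|]. intros; apply E; lia.
Qed.

Lemma rsum_plus n g h : rsum n (fun i => g i + h i) = rsum n g + rsum n h.
Proof. induction n as [|n IH]; simpl; [lra|]. rewrite IH; lra. Qed.

Lemma rsum_minus n g h : rsum n (fun i => g i - h i) = rsum n g - rsum n h.
Proof. induction n as [|n IH]; simpl; [lra|]. rewrite IH; lra. Qed.

Lemma rsum_opp n g : rsum n (fun i => - g i) = - rsum n g.
Proof. induction n as [|n IH]; simpl; [lra|]. rewrite IH; lra. Qed.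

Lemma rsum_scal n c g : rsum n (fun i => c * g i) = c * rsum n g.
Proof. induction n as [|n IH]; simpl; [lra|]. rewrite IH; lra. Qed.

Lemma rsum_const n c : rsum n (fun _ => c) = INR n * c.
Proof. induction n as [|n IH]; simpl rsum; [simpl; lra|]. rewrite IH, S_INR; lra. Qed.

Lemma rsum_le n g h : (forall i, (i < n)%nat -> g i <= h i) -> rsum n g <= rsum n h.
Proof.
  induction n as [|n IH]; intros Hle; simpl; [lra|].
  assert (g n <= h n) by (apply Hle; lia).
  assert (rsum n g <= rsum n h) by (apply IH; intros; apply Hle; lia).
  lra.
Qed.

Lemma rsum_nonneg n g : (forall i, (i < n)%nat -> 0 <= g i) -> 0 <= rsum n g.
Proof.
  intros H. replace 0 with (rsum n (fun _ => 0)) by (rewrite rsum_const; lra).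
  now apply rsum_le.
Qed.

Lemma rsum_term_le n g j :
  (forall i, (i < n)%nat -> 0 <= g i) -> (j < n)%nat -> g j <= rsum n g.
Proof.
  induction n as [|n IH]; intros H Hj; simpl; [lia|].
  assert (0 <= g n) by (apply H; lia).
  destruct (Nat.eq_dec j n) as [->|Hne].
  - assert (0 <= rsum n g) by (apply rsum_nonneg; intros; apply H; lia). lra.
  - assert (g j <= rsum n g) by (apply IH; [intros; apply H|]; lia). lra.
Qed.

Lemma rsum_telescope n (x : nat -> R) : rsum n (fun i => x (S i) - x i) = x n - x O.
Proof. induction n as [|n IH]; simpl; [lra|]. rewrite IH; lra. Qed.

Lemma ln_le_x_minus_1 z : 0 < z -> ln z <= z - 1.
Proof. intros Hz. pose proof (exp_ineq1_le (ln z)) as H. rewrite exp_ln in H by lra. lra. Qed.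

Lemma ln_2_pos : 0 < ln 2.
Proof. pose proof ln_lt_2. lra. Qed.

(* Stdlib's [ln] is total, with junk value [0] on nonpositive arguments. *)
Lemma ln_nonpos x : x <= 0 -> ln x = 0.
Proof. intros Hx. unfold ln. destruct (Rlt_dec 0 x); [exfalso; lra|auto]. Qed.

Lemma ln_ge_0 x : 1 <= x -> 0 <= ln x.
Proof. intros. rewrite <- ln_1. apply ln_le; lra. Qed.

Lemma ln_le_0 x : 0 < x -> x <= 1 -> ln x <= 0.
Proof. intros. rewrite <- ln_1. apply ln_le; lra. Qed.

Lemma ln_sqrt x : 0 < x -> ln x = 2 * ln (sqrt x).
Proof.
  intros Hx. pattern x at 1; rewrite <- (sqrt_sqrt x) by lra.
  rewrite ln_mult by (apply sqrt_lt_R0; lra). ring.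
Qed.

Lemma opp_ln_le_inv_sqrt y : 0 < y -> - ln y <= 2 / sqrt y.
Proof.
  intros Hy. pose proof (sqrt_lt_R0 y Hy) as Hs.
  pose proof (ln_le_x_minus_1 (/ sqrt y) (Rinv_0_lt_compat _ Hs)) as H.
  rewrite ln_Rinv in H by lra. rewrite (ln_sqrt y) by lra. unfold Rdiv. lra.
Qed.

Definition neg_xlnx (y : R) : R := - (y * ln y).

Lemma neg_xlnx_le_sqrt y : 0 <= y -> neg_xlnx y <= 2 * sqrt y.
Proof.
  unfold neg_xlnx. intros Hy. destruct (Req_dec y 0) as [->|Hy0].
  { rewrite ln_nonpos, sqrt_0 by lra. lra. }
  pose proof (sqrt_lt_R0 y ltac:(lra)).
  pose proof (opp_ln_le_inv_sqrt y ltac:(lra)).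
  replace (2 * sqrt y) with (y * (2 / sqrt y)).
  2:{ rewrite <- (sqrt_sqrt y) at 1 by lra. field. lra. }
  replace (- (y * ln y)) with (y * (- ln y)) by ring.
  apply Rmult_le_compat_l; lra.
Qed.

Lemma neg_xlnx_le_2 y : 0 <= y -> neg_xlnx y <= 2.
Proof.
  intros Hy. destruct (Rle_dec y 1).
  - pose proof (neg_xlnx_le_sqrt y Hy).
    assert (sqrt y <= 1) by (rewrite <- sqrt_1; apply sqrt_le_1_alt; lra). lra.
  - pose proof (ln_ge_0 y ltac:(lra)). unfold neg_xlnx. nra.
Qed.

Lemma neg_xlnx_ge y M : 0 <= y <= M -> - (M * M) <= neg_xlnx y.
Proof.
  unfold neg_xlnx. intros [H1 H2]. destruct (Req_dec y 0) as [->|Hy0].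
  { rewrite ln_nonpos by lra. nra. }
  pose proof (ln_le_x_minus_1 y ltac:(lra)). destruct (Rle_dec 1 y).
  - pose proof (ln_ge_0 y ltac:(lra)). nra.
  - pose proof (ln_le_0 y ltac:(lra) ltac:(lra)). nra.
Qed.

Lemma xln2x_le y M : 0 <= y <= M -> y * ln y ^ 2 <= 4 + M ^ 3.
Proof.
  intros [H1 H2]. assert (0 <= M ^ 3) by (apply pow_le; lra).
  destruct (Req_dec y 0) as [->|Hy0].
  { rewrite ln_nonpos by lra. simpl; lra. }
  destruct (Rle_dec y 1).
  - pose proof (opp_ln_le_inv_sqrt y ltac:(lra)). pose proof (sqrt_lt_R0 y ltac:(lra)).
    pose proof (ln_le_0 y ltac:(lra) ltac:(lra)).
    assert (ln y ^ 2 <= (2 / sqrt y) ^ 2)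
      by (replace (ln y ^ 2) with ((- ln y) ^ 2) by ring; apply pow_incr; lra).
    assert (y * (2 / sqrt y) ^ 2 = 4) by (rewrite <- (sqrt_sqrt y) at 1 by lra; field; lra).
    assert (y * ln y ^ 2 <= y * (2 / sqrt y) ^ 2) by (apply Rmult_le_compat_l; lra).
    lra.
  - pose proof (ln_ge_0 y ltac:(lra)). pose proof (ln_le_x_minus_1 y ltac:(lra)).
    assert (y * ln y ^ 2 <= M * M ^ 2)
      by (apply Rmult_le_compat; try lra; [apply pow2_ge_0 | apply pow_incr; lra]).
    simpl in *; nra.
Qed.

Lemma continuity_neg_xlnx : continuity neg_xlnx.
Proof.
  intros y. destruct (Rlt_dec 0 y) as [Hp|Hn].
  - unfold neg_xlnx. apply continuity_pt_opp, continuity_pt_mult; [apply continuity_pt_id|].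
    apply derivable_continuous_pt. exists (/ y). now apply derivable_pt_lim_ln.
  - destruct (Rlt_dec y 0) as [Hneg|Hz].
    + intros eps Heps. exists (- y). split; [lra|]. intros x [_ Hx].
      simpl in *. unfold R_dist in *. apply Rabs_def2 in Hx.
      unfold neg_xlnx. rewrite (ln_nonpos y), (ln_nonpos x) by lra.
      replace (- (x * 0) - - (y * 0)) with 0 by ring. rewrite Rabs_R0; lra.
    + (* at 0 the modulus comes from [neg_xlnx y <= 2 sqrt y] *)
      replace y with 0 by lra.
      intros eps Heps. exists (Rmin 1 (eps * eps / 4)). split; [apply Rmin_pos; nra|].
      intros x [_ Hx]. simpl in *. unfold R_dist, neg_xlnx in *.
      rewrite (ln_nonpos 0), Rminus_0_r in * by lra. rewrite Rmult_0_r, Ropp_0, Rminus_0_r.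
      destruct (Rle_dec x 0).
      { rewrite ln_nonpos by lra. rewrite Rmult_0_r, Ropp_0, Rabs_R0; lra. }
      rewrite Rabs_right in Hx by lra.
      assert (x < eps * eps / 4) by (eapply Rlt_le_trans; [apply Hx | apply Rmin_r]).
      assert (x < 1) by (eapply Rlt_le_trans; [apply Hx | apply Rmin_l]).
      pose proof (ln_le_0 x ltac:(lra) ltac:(lra)).
      rewrite Rabs_right by nra.
      pose proof (neg_xlnx_le_sqrt x ltac:(lra)). unfold neg_xlnx in *.
      assert (sqrt x < eps / 2).
      { rewrite <- (sqrt_Rsqr (eps / 2)) by lra. apply sqrt_lt_1_alt. unfold Rsqr. lra. }
      lra.
Qed.

Lemma continuity_identity : continuity (fun x => x).
Proof. intros x. apply continuity_pt_id. Qed.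

Lemma continuity_neg_xlnx_comp h : continuity h -> continuity (fun x => neg_xlnx (h x)).
Proof.
  intros H. change (continuity (comp neg_xlnx h)).
  apply continuity_comp; [exact H | exact continuity_neg_xlnx].
Qed.

Ltac solve_continuity :=
  repeat first
    [ assumption
    | solve [apply continuity_const; intros ? ?; reflexivity]
    | apply continuity_identity
    | apply continuity_neg_xlnx_comp
    | apply continuity_minus | apply continuity_plus | apply continuity_mult
    | apply continuity_opp
    | progress simpl pow ].

Lemma continuity_cauchy c s : 0 < s -> continuity (fun x => / (1 + ((x - c) / s) ^ 2)).
Proof.
  intros Hs x. apply continuity_pt_inv.
  - unfold Rdiv. revert x. solve_continuity.
  - pose proof (pow2_ge_0 ((x - c) / s)). lra.
Qed.

Lemma ex_RInt_continuity h u v : continuity h -> ex_RInt h u v.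
Proof.
  intros H. apply (ex_RInt_continuous (V := R_CompleteNormedModule)).
  intros z _. apply continuity_pt_filterlim, H.
Qed.

Lemma RInt_Chasles_rsum h n (x : nat -> R) : continuity h ->
  rsum n (fun i => RInt h (x i) (x (S i))) = RInt h (x O) (x n).
Proof.
  intros H. induction n as [|n IH]; simpl.
  - now rewrite RInt_point.
  - rewrite IH.
    exact (RInt_Chasles h _ _ _ (ex_RInt_continuity h _ _ H) (ex_RInt_continuity h _ _ H)).
Qed.

Lemma RInt_le_cont h k u v : u <= v -> continuity h -> continuity k ->
  (forall x, u <= x <= v -> h x <= k x) -> RInt h u v <= RInt k u v.
Proof.
  intros Huv Hh Hk Hle. apply RInt_le; auto using ex_RInt_continuity.
  intros; apply Hle; lra.
Qed.

Lemma RInt_plus_cont h k u v : continuity h -> continuity k ->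
  RInt (fun x => h x + k x) u v = RInt h u v + RInt k u v.
Proof. intros. apply (RInt_plus h k u v); auto using ex_RInt_continuity. Qed.

Lemma RInt_minus_cont h k u v : continuity h -> continuity k ->
  RInt (fun x => h x - k x) u v = RInt h u v - RInt k u v.
Proof. intros. apply (RInt_minus h k u v); auto using ex_RInt_continuity. Qed.

Lemma RInt_scal_cont h c u v : continuity h -> RInt (fun x => c * h x) u v = c * RInt h u v.
Proof. intros. apply (RInt_scal h u v c); auto using ex_RInt_continuity. Qed.

Lemma RInt_const_R c u v : RInt (fun _ => c) u v = (v - u) * c.
Proof. rewrite RInt_const. reflexivity. Qed.

Lemma RInt_ge_const h m u v : u <= v -> continuity h ->
  (forall x, u <= x <= v -> m <= h x) -> m * (v - u) <= RInt h u v.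
Proof.
  intros. rewrite Rmult_comm, <- RInt_const_R.
  apply RInt_le_cont; auto. solve_continuity.
Qed.

Lemma RInt_le_const h M u v : u <= v -> continuity h ->
  (forall x, u <= x <= v -> h x <= M) -> RInt h u v <= M * (v - u).
Proof.
  intros. rewrite Rmult_comm, <- RInt_const_R.
  apply RInt_le_cont; auto. solve_continuity.
Qed.

Lemma RInt_ge0_cont h u v : u <= v -> continuity h ->
  (forall x, u <= x <= v -> 0 <= h x) -> 0 <= RInt h u v.
Proof. intros Huv Hh Hpos. pose proof (RInt_ge_const h 0 u v Huv Hh Hpos). lra. Qed.

Lemma is_derive_cauchy_primitive s c x : 0 < s ->
  is_derive (fun x => s * atan ((x - c) / s)) x (/ (1 + ((x - c) / s) ^ 2)).
Proof.
  intros Hs.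
  assert (Hin : is_derive (fun x => (x - c) / s) x (/ s)) by (auto_derive; [auto | field; lra]).
  pose proof (is_derive_scal _ x s _ (is_derive_comp atan _ x _ _ (is_derive_atan _) Hin)) as H.
  simpl in H. unfold scal, mult in H; simpl in H. unfold mult in H; simpl in H.
  replace (/ (1 + ((x - c) / s) ^ 2)) with (s * (/ s * / (1 + ((x - c) / s)²))); [exact H|].
  unfold Rsqr. simpl. field. split; [lra|].
  pose proof (Rle_0_sqr (x - c)). unfold Rsqr in *. nra.
Qed.

Lemma RInt_cauchy_le c s u v : 0 < s -> RInt (fun x => / (1 + ((x - c) / s) ^ 2)) u v <= s * PI.
Proof.
  intros Hs.
  replace (RInt _ u v) with (s * (atan ((v - c) / s) - atan ((u - c) / s))).
  - pose proof (atan_bound ((v - c) / s)). pose proof (atan_bound ((u - c) / s)).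
    apply Rmult_le_compat_l; lra.
  - symmetry. apply is_RInt_unique.
    replace (s * _) with (minus ((fun x => s * atan ((x - c) / s)) v)
                                ((fun x => s * atan ((x - c) / s)) u))
      by (unfold minus, plus, opp; simpl; ring).
    apply (is_RInt_derive (fun x => s * atan ((x - c) / s))).
    + intros x _. now apply is_derive_cauchy_primitive.
    + intros x _. apply continuity_pt_filterlim. now apply continuity_cauchy.
Qed.

Lemma RInt_sq_shift m u v : RInt (fun x => (x - m) ^ 2) u v = ((v - m) ^ 3 - (u - m) ^ 3) / 3.
Proof.
  apply is_RInt_unique.
  replace (((v - m) ^ 3 - (u - m) ^ 3) / 3) with
    (minus ((fun x => (x - m) ^ 3 / 3) v) ((fun x => (x - m) ^ 3 / 3) u))
    by (unfold minus, plus, opp; simpl; field).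
  apply (is_RInt_derive (fun x => (x - m) ^ 3 / 3)).
  - intros x _. auto_derive; [auto | field].
  - intros x _. apply continuity_pt_filterlim. revert x. solve_continuity.
Qed.

Lemma RInt_sq_ge c u v : u <= v -> (v - u) ^ 3 / 12 <= RInt (fun x => (x - c) ^ 2) u v.
Proof.
  intros. rewrite RInt_sq_shift.
  assert (0 <= (v - u) * (3 * ((v - c) + (u - c)) ^ 2))
    by (apply Rmult_le_pos; [lra | pose proof (pow2_ge_0 ((v - c) + (u - c))); lra]).
  assert (4 * ((v - c) ^ 3 - (u - c) ^ 3) - (v - u) ^ 3
          = (v - u) * (3 * ((v - c) + (u - c)) ^ 2)) by ring.
  lra.
Qed.

Lemma RInt_sq_mid u v : RInt (fun x => (x - (u + v) / 2) ^ 2) u v = (v - u) ^ 3 / 12.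
Proof. rewrite RInt_sq_shift. simpl. field. Qed.

Lemma gibbs_ineq p q : 0 <= p -> 0 < q -> p - q <= p * (ln p - ln q).
Proof.
  intros Hp Hq. destruct (Req_dec p 0) as [->|Hp0]; [lra|].
  pose proof (ln_le_x_minus_1 (q / p) ltac:(apply Rdiv_lt_0_compat; lra)) as H.
  rewrite ln_div in H by lra.
  assert (p * (ln q - ln p) <= p * (q / p - 1)) by (apply Rmult_le_compat_l; lra).
  replace (p * (q / p - 1)) with (q - p) in * by (field; lra). lra.
Qed.

(* [min_D (lam D^2 / 12 - ln D)], attained at [D^2 = 6 / lam]: the Lagrangian of a
   uniform quantizer of step [D] for a flat density, up to the differential entropy. *)
Definition lagrangian_const (lam : R) : R := /2 * ln (lam / 6) + /2.

Lemma lagrangian_const_step d : 0 < d -> lagrangian_const (6 / d ^ 2) = - ln d + /2.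
Proof.
  intros Hd. unfold lagrangian_const. replace (6 / d ^ 2 / 6) with (/ (d * d)) by (field; lra).
  rewrite ln_Rinv, ln_mult by nra. field.
Qed.

(* Summed over a partition, the cell gaps give [h + lagrangian_const lam - H - lam D]
   ([rsum_cell_gap]), the defect of the entropy-distortion lower bound. *)
Definition cell_gap (g : R -> R) (lam c u v : R) : R :=
  RInt (fun x => neg_xlnx (g x)) u v + lagrangian_const lam * RInt g u v
  + RInt g u v * ln (RInt g u v) - lam * RInt (fun x => (x - c) ^ 2 * g x) u v.

(* What the comparison with a Cauchy density of scale [1 / sqrt lam] costs per unit mass. *)
Definition cauchy_gap_const : R := Rmax 0 (ln PI - /2 * ln 6 + /2).

Lemma cauchy_gap_const_ge0 : 0 <= cauchy_gap_const.
Proof. apply Rmax_l. Qed.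

Definition unif_modulus (g : R -> R) (a b eta w : R) : Prop :=
  forall x y, a <= x <= b -> a <= y <= b -> Rabs (x - y) < eta -> Rabs (g x - g y) < w.

Lemma neg_xlnx_le_cauchy y p s t : 0 <= y -> 0 < p -> 0 < s ->
  neg_xlnx y <= (ln (PI * s) - ln p) * y + t ^ 2 * y + p / (PI * s) * / (1 + t ^ 2) - y.
Proof.
  intros Hy Hp Hs. pose proof PI_RGT_0. pose proof (pow2_ge_0 t).
  set (q := p / (PI * s) * / (1 + t ^ 2)).
  assert (Hq : 0 < q)
    by (apply Rmult_lt_0_compat; [apply Rdiv_lt_0_compat; nra | apply Rinv_0_lt_compat; lra]).
  assert (Hlnq : ln q = ln p - ln (PI * s) - ln (1 + t ^ 2)).
  { unfold q. rewrite ln_mult, ln_div, ln_Rinv; try lra; try nra.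
    - apply Rdiv_lt_0_compat; nra.
    - apply Rinv_0_lt_compat; lra. }
  pose proof (gibbs_ineq y q Hy Hq).
  pose proof (ln_le_x_minus_1 (1 + t ^ 2) ltac:(lra)).
  assert (y * ln (1 + t ^ 2) <= y * t ^ 2) by (apply Rmult_le_compat_l; lra).
  unfold neg_xlnx. nra.
Qed.

Lemma le_cauchy_weight y M t : 0 <= y <= M -> y <= M * / (1 + t ^ 2) + t ^ 2 * y.
Proof.
  intros [Hy HM]. pose proof (pow2_ge_0 t) as Ht.
  assert (Hinv : 0 < / (1 + t ^ 2)) by (apply Rinv_0_lt_compat; lra).
  destruct (Rle_dec 1 (t ^ 2)); [nra|].
  assert (1 - t ^ 2 <= / (1 + t ^ 2)).
  { apply (Rmult_le_reg_l (1 + t ^ 2)); [lra|]. rewrite Rinv_r by lra. nra. }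
  nra.
Qed.

Lemma ln_bracket lam D rho : 0 < lam -> 0 < D -> 0 < rho ->
  lagrangian_const lam + ln D - lam * D ^ 2 / (12 * rho) <= /2 * ln rho.
Proof.
  intros. set (z := lam * D ^ 2 / (6 * rho)).
  assert (Hz : 0 < z)
    by (unfold z; apply Rdiv_lt_0_compat; [apply Rmult_lt_0_compat, pow_lt|]; lra).
  pose proof (ln_le_x_minus_1 z Hz).
  assert (ln z = ln (lam / 6) + 2 * ln D - ln rho).
  { replace z with (lam / 6 * (D * D) / rho) by (unfold z; field; lra).
    rewrite ln_div, !ln_mult by (try apply Rmult_lt_0_compat; try apply Rdiv_lt_0_compat; nra).
    ring. }
  assert (lam * D ^ 2 / (12 * rho) = z / 2) by (unfold z; field; lra).
  unfold lagrangian_const. lra.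
Qed.

Section Cell.

Variable g : R -> R.
Hypothesis g_cont : continuity g.
Hypothesis g_ge0 : forall x, 0 <= g x.

Lemma continuity_moment c : continuity (fun x => (x - c) ^ 2 * g x).
Proof. solve_continuity. Qed.

Lemma RInt_moment_ge0 c u v : u <= v -> 0 <= RInt (fun x => (x - c) ^ 2 * g x) u v.
Proof.
  intros. apply RInt_ge0_cont; auto using continuity_moment.
  intros x _. pose proof (g_ge0 x). pose proof (pow2_ge_0 (x - c)). nra.
Qed.

(* Gibbs' inequality against the Cauchy density of scale [s] centred at [c], whose
   log-penalty [ln (1 + t^2) <= t^2] turns into the second moment of [g]. *)
Lemma RInt_neg_xlnx_le_cauchy c s u v : 0 < s -> u <= v -> 0 < RInt g u v ->
  RInt (fun x => neg_xlnx (g x)) u v <=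
  - (RInt g u v * ln (RInt g u v)) + RInt g u v * ln (PI * s)
  + RInt (fun x => (x - c) ^ 2 * g x) u v / s ^ 2.
Proof.
  intros Hs Huv Hp. pose proof PI_RGT_0.
  set (p := RInt g u v : R) in *. set (d := RInt (fun x => (x - c) ^ 2 * g x) u v : R).
  set (cau := fun x => / (1 + ((x - c) / s) ^ 2)).
  assert (Hcau : continuity cau) by now apply continuity_cauchy.
  set (K := ln (PI * s) - ln p).
  eapply Rle_trans.
  - apply (RInt_le_cont _ (fun x => K * g x + / s ^ 2 * ((x - c) ^ 2 * g x)
                                    + p / (PI * s) * cau x - g x));
      [lra | solve_continuity | solve_continuity |].
    intros x _. unfold cau.
    replace (/ s ^ 2 * ((x - c) ^ 2 * g x)) with (((x - c) / s) ^ 2 * g x) by (field; lra).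
    apply neg_xlnx_le_cauchy; auto.
  - assert (Hm := continuity_moment c).
    rewrite RInt_minus_cont, !RInt_plus_cont, !RInt_scal_cont by solve_continuity.
    fold p d. pose proof (RInt_cauchy_le c s u v Hs) as Hcau_int. fold cau in Hcau_int.
    assert (p / (PI * s) * RInt cau u v <= p).
    { replace p with (p / (PI * s) * (s * PI)) at 2 by (field; nra).
      apply Rmult_le_compat_l; auto. apply Rlt_le, Rdiv_lt_0_compat; nra. }
    unfold K. unfold Rdiv at 2. nra.
Qed.

Lemma cell_gap_le_mass c u v lam : u <= v -> 0 < lam -> 0 < RInt g u v ->
  cell_gap g lam c u v <= cauchy_gap_const * RInt g u v.
Proof.
  intros Huv Hl Hp. pose proof (sqrt_lt_R0 lam Hl) as Hsq.
  pose proof (RInt_neg_xlnx_le_cauchy c (/ sqrt lam) u v (Rinv_0_lt_compat _ Hsq) Huv Hp) as G.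
  unfold cell_gap.
  set (p := RInt g u v : R) in *. set (d := RInt (fun x => (x - c) ^ 2 * g x) u v : R) in *.
  assert (E1 : ln (PI * / sqrt lam) = ln PI - /2 * ln lam).
  { pose proof PI_RGT_0.
    rewrite ln_mult, ln_Rinv, (ln_sqrt lam) by (try apply Rinv_0_lt_compat; lra). field. }
  assert (E2 : d / (/ sqrt lam) ^ 2 = lam * d).
  { rewrite pow_inv. simpl. rewrite Rmult_1_r, sqrt_sqrt by lra. field. lra. }
  assert (E3 : lagrangian_const lam = /2 * ln lam - /2 * ln 6 + /2).
  { unfold lagrangian_const. rewrite ln_div by lra. ring. }
  rewrite E1, E2 in G. rewrite E3.
  assert ((ln PI - /2 * ln 6 + /2) * p <= cauchy_gap_const * p)
    by (apply Rmult_le_compat_r; [lra | apply Rmax_r]).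
  nra.
Qed.

Lemma cell_gap_flat c u v lam m w : u < v -> 0 < m -> 0 < lam -> 0 <= w ->
  (forall x, u <= x <= v -> m <= g x <= m + 2 * w) ->
  cell_gap g lam c u v <= 3/2 * ln ((m + 2 * w) / m) * RInt g u v.
Proof.
  intros Huv Hm Hl Hw Hb. unfold cell_gap.
  set (p := RInt g u v : R). set (d := RInt (fun x => (x - c) ^ 2 * g x) u v : R).
  set (D := v - u). set (rho := (m + 2 * w) / m).
  assert (Hrho : 0 < rho) by (unfold rho; apply Rdiv_lt_0_compat; lra).
  assert (HD : 0 < D) by (unfold D; lra).
  assert (Hp1 : m * D <= p) by (apply RInt_ge_const; auto; [lra | intros; apply Hb; auto]).
  assert (Hp2 : p <= rho * m * D).
  { replace (rho * m) with (m + 2 * w) by (unfold rho; field; lra).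
    apply RInt_le_const; auto; [lra | intros; apply Hb; auto]. }
  assert (Hp : 0 < p) by nra.
  assert (Hent : RInt (fun x => neg_xlnx (g x)) u v <= - ln m * p).
  { unfold p. rewrite <- RInt_scal_cont by auto.
    apply RInt_le_cont; [lra | solve_continuity | solve_continuity |].
    intros x Hx. unfold neg_xlnx. destruct (Hb x Hx).
    assert (ln m <= ln (g x)) by (apply ln_le; lra). nra. }
  assert (Hd : m * (D ^ 3 / 12) <= d).
  { eapply Rle_trans; [apply Rmult_le_compat_l, (RInt_sq_ge c u v); lra|].
    unfold d. rewrite <- RInt_scal_cont by solve_continuity.
    apply RInt_le_cont; [lra | solve_continuity | solve_continuity |].
    intros x Hx. destruct (Hb x Hx). pose proof (pow2_ge_0 (x - c)). nra. }
  assert (Hlp : ln p <= ln rho + ln m + ln D)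
    by (rewrite <- !ln_mult by nra; apply ln_le; auto).
  assert (Hld : lam * (p * D ^ 2 / (12 * rho)) <= lam * d).
  { apply Rmult_le_compat_l; [lra|]. eapply Rle_trans; [|apply Hd].
    replace (p * D ^ 2 / (12 * rho)) with ((p / rho) * (D ^ 2 / 12)) by (field; lra).
    replace (m * (D ^ 3 / 12)) with ((m * D) * (D ^ 2 / 12)) by field.
    apply Rmult_le_compat_r; [pose proof (pow2_ge_0 D); lra|].
    apply (Rmult_le_reg_l rho); auto. replace (rho * (p / rho)) with (p : R) by (field; lra). nra. }
  pose proof (ln_bracket lam D rho Hl HD Hrho).
  assert (p * ln p <= p * (ln rho + ln m + ln D)) by (apply Rmult_le_compat_l; lra).
  assert (p * (lagrangian_const lam + ln D - lam * D ^ 2 / (12 * rho)) <= p * (/2 * ln rho))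
    by (apply Rmult_le_compat_l; lra).
  assert (lam * (p * D ^ 2 / (12 * rho)) = p * (lam * D ^ 2 / (12 * rho))) by (field; lra).
  fold rho. nra.
Qed.

Lemma RInt_le_cauchy_moment c u v r M : u <= v -> 0 < r ->
  (forall x, u <= x <= v -> g x <= M) ->
  RInt g u v <= PI * r * M + RInt (fun x => (x - c) ^ 2 * g x) u v / r ^ 2.
Proof.
  intros Huv Hr Hb.
  assert (HM : 0 <= M) by (pose proof (g_ge0 u); pose proof (Hb u ltac:(lra)); lra).
  set (cau := fun x => / (1 + ((x - c) / r) ^ 2)).
  assert (Hcau : continuity cau) by now apply continuity_cauchy.
  assert (Hm := continuity_moment c).
  eapply Rle_trans.
  - apply (RInt_le_cont _ (fun x => M * cau x + / r ^ 2 * ((x - c) ^ 2 * g x)));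
      [lra | solve_continuity | solve_continuity |].
    intros x Hx. unfold cau.
    replace (/ r ^ 2 * ((x - c) ^ 2 * g x)) with (((x - c) / r) ^ 2 * g x) by (field; lra).
    apply le_cauchy_weight. split; [apply g_ge0 | apply Hb, Hx].
  - rewrite RInt_plus_cont, !RInt_scal_cont by solve_continuity.
    pose proof (RInt_cauchy_le c r u v Hr) as Hcau_int. fold cau in Hcau_int.
    assert (M * RInt cau u v <= M * (r * PI)) by (apply Rmult_le_compat_l; auto).
    unfold Rdiv. nra.
Qed.

Lemma cell_gap_small c u v lam gam w : u < v -> 0 < lam -> 0 < gam -> 0 <= w ->
  0 < RInt g u v -> (forall x, u <= x <= v -> Rabs (g x - g u) < w) ->
  cell_gap g lam c u v <=
  3/2 * ln (1 + 2 * w / gam) * RInt g u v + cauchy_gap_const * (gam + 2 * w) * (v - u).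
Proof.
  intros Huv Hl Hgam Hw Hp Hosc.
  assert (Hosc' : forall x, u <= x <= v -> g u - w <= g x <= g u + w)
    by (intros x Hx; pose proof (Rabs_def2 _ _ (Hosc x Hx)); lra).
  pose proof cauchy_gap_const_ge0.
  assert (Hln : 0 <= ln (1 + 2 * w / gam))
    by (apply ln_ge_0; pose proof (Rdiv_le_0_compat (2 * w) gam ltac:(lra) Hgam); lra).
  destruct (Rle_dec (gam + w) (g u)) as [Hhigh|Hlow].
  - assert (ln ((g u - w + 2 * w) / (g u - w)) <= ln (1 + 2 * w / gam)).
    { apply ln_le; [apply Rdiv_lt_0_compat; lra|].
      replace ((g u - w + 2 * w) / (g u - w)) with (1 + 2 * w / (g u - w)) by (field; lra).
      apply Rplus_le_compat_l. unfold Rdiv. apply Rmult_le_compat_l; [lra|].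
      apply Rinv_le_contravar; lra. }
    pose proof (cell_gap_flat c u v lam (g u - w) w Huv ltac:(lra) Hl Hw
                  ltac:(intros x Hx; specialize (Hosc' x Hx); lra)).
    assert (0 <= cauchy_gap_const * (gam + 2 * w) * (v - u))
      by (apply Rmult_le_pos; [apply Rmult_le_pos|]; lra).
    nra.
  - assert (RInt g u v <= (gam + 2 * w) * (v - u))
      by (apply RInt_le_const; auto; [lra | intros x Hx; specialize (Hosc' x Hx); lra]).
    pose proof (cell_gap_le_mass c u v lam ltac:(lra) Hl Hp).
    assert (0 <= 3/2 * ln (1 + 2 * w / gam) * RInt g u v) by (apply Rmult_le_pos; lra).
    nra.
Qed.

Lemma cell_gap_wide c u v lam r M eta : u <= v -> 0 < lam -> 0 < r -> 0 <= M -> 0 < eta ->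
  eta <= v - u -> 0 < RInt g u v -> (forall x, u <= x <= v -> g x <= M) ->
  cell_gap g lam c u v <=
  cauchy_gap_const * PI * r * M / eta * (v - u)
  + cauchy_gap_const / r ^ 2 * RInt (fun x => (x - c) ^ 2 * g x) u v.
Proof.
  intros Huv Hl Hr HM Heta Hwide Hp Hb. pose proof PI_RGT_0. pose proof cauchy_gap_const_ge0.
  pose proof (RInt_le_cauchy_moment c u v r M Huv Hr Hb) as Hmass.
  pose proof (cell_gap_le_mass c u v lam Huv Hl Hp).
  assert (PI * r * M <= PI * r * M / eta * (v - u)).
  { replace (PI * r * M / eta * (v - u)) with (PI * r * M * ((v - u) / eta)) by (field; lra).
    rewrite <- (Rmult_1_r (PI * r * M)) at 1.
    apply Rmult_le_compat_l; [apply Rmult_le_pos; [|lra]; nra|].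
    apply (Rmult_le_reg_l eta); auto.
    replace (eta * ((v - u) / eta)) with (v - u) by (field; lra). lra. }
  replace (cauchy_gap_const / r ^ 2 * RInt (fun x => (x - c) ^ 2 * g x) u v)
    with (cauchy_gap_const * (RInt (fun x => (x - c) ^ 2 * g x) u v / r ^ 2)) by (field; lra).
  nra.
Qed.

End Cell.

Definition cont_density (g : R -> R) (a b : R) : Prop :=
  a < b /\ continuity g /\ (forall x, 0 <= g x) /\ RInt g a b = 1 /\
  (forall u v, a <= u -> u < v -> v <= b -> 0 < RInt g u v).

Lemma cont_density_bounded g a b : cont_density g a b ->
  exists M, 0 < M /\ forall x, a <= x <= b -> g x <= M.
Proof.
  intros [Hab [Hc _]].
  destruct (continuity_ab_maj g a b ltac:(lra) (fun c _ => Hc c)) as [xM [HM _]].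
  exists (Rmax 1 (g xM)). split; [pose proof (Rmax_l 1 (g xM)); lra|].
  intros x Hx. eapply Rle_trans; [apply HM; auto | apply Rmax_r].
Qed.

Lemma cont_density_unif_modulus g a b w : cont_density g a b -> 0 < w ->
  exists eta, 0 < eta /\ unif_modulus g a b eta w.
Proof.
  intros [Hab [Hc _]] Hw.
  destruct (@Heine_cor1 g a b Hab (fun x _ => Hc x) (mkposreal w Hw)) as [eta [_ Heta]].
  exists eta. split; [apply cond_pos | exact Heta].
Qed.

(* Short cells where [g] is large are nearly flat; short cells where [g] is small carry
   little mass; wide cells are few, and the moment controls their mass. *)
Lemma cell_gap_bound g a b c u v lam M gam w eta r :
  cont_density g a b -> a <= u -> u < v -> v <= b ->
  0 < lam -> 0 < gam -> 0 <= w -> 0 < eta -> 0 < r -> 0 <= M ->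
  (forall x, a <= x <= b -> g x <= M) -> unif_modulus g a b eta w ->
  cell_gap g lam c u v <=
  3/2 * ln (1 + 2 * w / gam) * RInt g u v
  + (cauchy_gap_const * (gam + 2 * w) + cauchy_gap_const * PI * r * M / eta) * (v - u)
  + cauchy_gap_const / r ^ 2 * RInt (fun x => (x - c) ^ 2 * g x) u v.
Proof.
  intros [Hab [Hc [Hg0 [_ Hpos]]]] Hau Huv Hvb Hl Hgam Hw Heta Hr HM HMb Hmod.
  pose proof (Hpos u v Hau Huv Hvb) as Hp. pose proof PI_RGT_0. pose proof cauchy_gap_const_ge0.
  assert (0 <= 3/2 * ln (1 + 2 * w / gam) * RInt g u v).
  { apply Rmult_le_pos; [|lra]. apply Rmult_le_pos; [lra|].
    apply ln_ge_0. pose proof (Rdiv_le_0_compat (2 * w) gam ltac:(lra) Hgam). lra. }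
  assert (0 <= cauchy_gap_const * (gam + 2 * w) * (v - u))
    by (apply Rmult_le_pos; [apply Rmult_le_pos|]; lra).
  assert (0 <= cauchy_gap_const * PI * r * M / eta * (v - u)).
  { apply Rmult_le_pos; [|lra]. apply Rdiv_le_0_compat; [|lra].
    repeat (apply Rmult_le_pos; [|lra]); lra. }
  assert (0 <= cauchy_gap_const / r ^ 2 * RInt (fun x => (x - c) ^ 2 * g x) u v).
  { apply Rmult_le_pos; [apply Rdiv_le_0_compat; [lra | apply pow_lt; lra]|].
    apply RInt_moment_ge0; auto; lra. }
  destruct (Rlt_dec (v - u) eta) as [Hsmall|Hwide].
  - assert (Hosc : forall x, u <= x <= v -> Rabs (g x - g u) < w)
      by (intros x Hx; apply Hmod; try lra; rewrite Rabs_right; lra).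
    pose proof (cell_gap_small g Hc Hg0 c u v lam gam w Huv Hl Hgam Hw Hp Hosc). nra.
  - pose proof (cell_gap_wide g Hc Hg0 c u v lam r M eta ltac:(lra) Hl Hr HM Heta
                  ltac:(lra) Hp ltac:(intros; apply HMb; lra)). nra.
Qed.

Definition is_partition (a b : R) (n : nat) (x : nat -> R) : Prop :=
  x O = a /\ x n = b /\ (forall i, (i < n)%nat -> x i < x (S i)).

Lemma is_partition_bounds a b n x : is_partition a b n x ->
  forall i, (i <= n)%nat -> a <= x i <= b.
Proof.
  intros [H0 [Hn Hs]].
  assert (Hmono : forall i j, (i <= j <= n)%nat -> x i <= x j).
  { intros i j [Hij Hjn]. induction j as [|j IH].
    - replace i with O by lia. lra.
    - destruct (Nat.eq_dec i (S j)) as [->|]; [lra|].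
      assert (x i <= x j) by (apply IH; lia). assert (x j < x (S j)) by (apply Hs; lia). lra. }
  intros i Hi. rewrite <- H0, <- Hn. split; apply Hmono; lia.
Qed.

Lemma is_partition_cell a b n x i : is_partition a b n x -> (i < n)%nat ->
  a <= x i /\ x i < x (S i) /\ x (S i) <= b.
Proof.
  intros Hp Hi. pose proof (is_partition_bounds a b n x Hp i ltac:(lia)).
  pose proof (is_partition_bounds a b n x Hp (S i) Hi). destruct Hp as [_ [_ Hs]].
  pose proof (Hs i Hi). lra.
Qed.

Lemma neg_xlnx_rescale p delta : 0 <= p -> 0 < delta ->
  neg_xlnx p = - p * ln delta + delta * neg_xlnx (p / delta).
Proof.
  intros Hp Hd. unfold neg_xlnx. destruct (Req_dec p 0) as [->|Hp0].
  { replace (0 / delta) with 0 by (field; lra). ring. }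
  rewrite ln_div by lra. field. lra.
Qed.

Definition cell_mass (g : R -> R) (x : nat -> R) (i : nat) : R := RInt g (x i) (x (S i)).

Definition entropy_nats (n : nat) (p : nat -> R) : R := rsum n (fun i => neg_xlnx (p i)).

Definition is_distribution (n : nat) (p : nat -> R) : Prop :=
  (forall i, (i < n)%nat -> 0 <= p i) /\ rsum n p = 1.

Definition partition_distortion (n : nat) (g : R -> R) (x cq : nat -> R) : R :=
  rsum n (fun i => RInt (fun t => (t - cq i) ^ 2 * g t) (x i) (x (S i))).

Definition diff_entropy (g : R -> R) (a b : R) : R := RInt (fun t => neg_xlnx (g t)) a b.

Lemma diff_entropy_rsum g a b n x : continuity g -> is_partition a b n x ->
  diff_entropy g a b = rsum n (fun i => RInt (fun t => neg_xlnx (g t)) (x i) (x (S i))).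
Proof.
  intros Hc [H0 [Hn _]]. unfold diff_entropy.
  rewrite RInt_Chasles_rsum, H0, Hn by solve_continuity. reflexivity.
Qed.

Lemma entropy_nats_rescale n p delta : is_distribution n p -> 0 < delta ->
  entropy_nats n p = - ln delta + rsum n (fun i => delta * neg_xlnx (p i / delta)).
Proof.
  intros [Hp0 Hsum] Hd. unfold entropy_nats.
  rewrite (rsum_ext _ _ (fun i => - ln delta * p i + delta * neg_xlnx (p i / delta)))
    by (intros i Hi; rewrite (neg_xlnx_rescale (p i) delta) by auto; ring).
  rewrite rsum_plus, rsum_scal, Hsum. ring.
Qed.

Lemma rsum_cell_mass g a b n x : cont_density g a b -> is_partition a b n x ->
  rsum n (cell_mass g x) = 1.
Proof.
  intros [_ [Hc [_ [H1 _]]]] [H0 [Hn _]]. unfold cell_mass.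
  rewrite RInt_Chasles_rsum, H0, Hn by auto. exact H1.
Qed.

Lemma cell_mass_distribution g a b n x : cont_density g a b -> is_partition a b n x ->
  is_distribution n (cell_mass g x).
Proof.
  intros Hg Hp. split; [|exact (rsum_cell_mass g a b n x Hg Hp)].
  intros i Hi. destruct (is_partition_cell a b n x i Hp Hi) as [_ [Hlt _]].
  apply RInt_ge0_cont; [lra | apply Hg | intros; apply Hg].
Qed.

Lemma rsum_cell_gap g a b n x cq lam : cont_density g a b -> is_partition a b n x ->
  rsum n (fun i => cell_gap g lam (cq i) (x i) (x (S i))) =
  diff_entropy g a b + lagrangian_const lam - entropy_nats n (cell_mass g x)
  - lam * partition_distortion n g x cq.
Proof.
  intros Hg Hp. pose proof (rsum_cell_mass g a b n x Hg Hp) as Hsum.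
  destruct Hg as [_ [Hc _]].
  rewrite (diff_entropy_rsum g a b n x Hc Hp).
  assert (Hnats : entropy_nats n (cell_mass g x)
                  = - rsum n (fun i => cell_mass g x i * ln (cell_mass g x i)))
    by (unfold entropy_nats, neg_xlnx; apply rsum_opp).
  rewrite Hnats. unfold cell_gap, partition_distortion.
  rewrite !rsum_minus, !rsum_plus, !rsum_scal. unfold cell_mass in *. rewrite Hsum. ring.
Qed.

Lemma partition_gap_bound g a b n x cq lam M gam w eta r :
  cont_density g a b -> is_partition a b n x ->
  0 < lam -> 0 < gam -> 0 <= w -> 0 < eta -> 0 < r -> 0 <= M ->
  (forall x, a <= x <= b -> g x <= M) -> unif_modulus g a b eta w ->
  diff_entropy g a b + lagrangian_const lam - entropy_nats n (cell_mass g x)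
  - lam * partition_distortion n g x cq <=
  3/2 * ln (1 + 2 * w / gam)
  + (cauchy_gap_const * (gam + 2 * w) + cauchy_gap_const * PI * r * M / eta) * (b - a)
  + cauchy_gap_const / r ^ 2 * partition_distortion n g x cq.
Proof.
  intros Hg Hp Hl Hgam Hw Heta Hr HM HMb Hmod.
  rewrite <- (rsum_cell_gap g a b n x cq lam Hg Hp).
  eapply Rle_trans.
  - apply rsum_le. intros i Hi. destruct (is_partition_cell a b n x i Hp Hi) as [Hlo [Hlt Hhi]].
    exact (cell_gap_bound g a b (cq i) (x i) (x (S i)) lam M gam w eta r
             Hg Hlo Hlt Hhi Hl Hgam Hw Heta Hr HM HMb Hmod).
  - rewrite !rsum_plus, !rsum_scal, rsum_telescope.
    fold (cell_mass g x). rewrite (rsum_cell_mass g a b n x Hg Hp).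
    destruct Hp as [-> [-> _]]. unfold partition_distortion. lra.
Qed.

Lemma mul_div_succ_le y e : 0 <= y -> 0 <= e -> y * (e / (y + 1)) <= e.
Proof.
  intros Hy He. replace (y * (e / (y + 1))) with (e * (y / (y + 1))) by (field; lra).
  rewrite <- (Rmult_1_r e) at 2. apply Rmult_le_compat_l; [lra|].
  apply (Rmult_le_reg_l (y + 1)); [lra|].
  replace ((y + 1) * (y / (y + 1))) with y by (field; lra). lra.
Qed.

Lemma small_cell_parameters e Y : 0 < e -> 0 <= Y -> exists gam w, 0 < gam /\ 0 < w /\
  3/2 * ln (1 + 2 * w / gam) <= e /\ Y * (gam + 2 * w) <= 2 * e.
Proof.
  intros He HY. set (gam := e / (Y + 1)). set (w := Rmin (e * gam / 3) (e / 2 / (Y + 1))).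
  assert (Hgam : 0 < gam) by (unfold gam; apply Rdiv_lt_0_compat; lra).
  assert (Hw : 0 < w) by (apply Rmin_pos; apply Rdiv_lt_0_compat; nra).
  exists gam, w. split; [exact Hgam | split; [exact Hw | split]].
  - assert (w <= e * gam / 3) by apply Rmin_l.
    assert (2 * w / gam <= 2 * e / 3).
    { apply (Rmult_le_reg_r gam); auto.
      replace (2 * w / gam * gam) with (2 * w) by (field; lra). nra. }
    pose proof (ln_le_x_minus_1 (1 + 2 * w / gam)
                  ltac:(pose proof (Rdiv_le_0_compat (2 * w) gam ltac:(lra) Hgam); lra)).
    lra.
  - assert (w <= e / 2 / (Y + 1)) by apply Rmin_r.
    pose proof (mul_div_succ_le Y e HY ltac:(lra)).
    pose proof (mul_div_succ_le Y (e / 2) HY ltac:(lra)).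
    assert (Y * w <= Y * (e / 2 / (Y + 1))) by (apply Rmult_le_compat_l; lra).
    unfold gam. lra.
Qed.

(* Entropy-constrained analogue of Gersho's bound. *)
Lemma entropy_distortion_lower_bound g a b : cont_density g a b ->
  forall eps, 0 < eps -> exists D0, 0 < D0 /\
  forall lam n x cq, 0 < lam -> is_partition a b n x -> partition_distortion n g x cq <= D0 ->
  diff_entropy g a b + lagrangian_const lam - eps
  <= entropy_nats n (cell_mass g x) + lam * partition_distortion n g x cq.
Proof.
  intros Hg eps Heps. destruct (cont_density_bounded g a b Hg) as [M [HM HMb]].
  pose proof Hg as [Hab _]. pose proof cauchy_gap_const_ge0 as Hc. pose proof PI_RGT_0.
  set (c := cauchy_gap_const) in *. set (e := eps / 5).
  assert (He : 0 < e) by (unfold e; lra).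
  destruct (small_cell_parameters e (c * (b - a)) He ltac:(apply Rmult_le_pos; lra))
    as [gam [w [Hgam [Hw [T1 T23]]]]].
  destruct (cont_density_unif_modulus g a b w Hg Hw) as [eta [Heta Hmod]].
  set (Y := c * PI * M * (b - a)).
  assert (HY : 0 <= Y) by (unfold Y; repeat (apply Rmult_le_pos; [|lra]); lra).
  set (r := e * eta / (Y + 1)).
  assert (Hr : 0 < r) by (unfold r; apply Rdiv_lt_0_compat; nra).
  assert (Hr2 : 0 < r ^ 2) by (apply pow_lt; lra).
  exists (e * r ^ 2 / (c + 1)). split; [apply Rdiv_lt_0_compat; nra|].
  intros lam n x cq Hl Hp HD.
  pose proof (partition_gap_bound g a b n x cq lam M gam w eta r Hg Hp Hl Hgam
                ltac:(lra) Heta Hr ltac:(lra) HMb Hmod) as Hgap.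
  fold c in Hgap. set (D := partition_distortion n g x cq) in *.
  assert (T4 : c * PI * r * M / eta * (b - a) <= e).
  { replace (c * PI * r * M / eta * (b - a)) with (Y * (r / eta)) by (unfold Y; field; lra).
    replace (r / eta) with (e / (Y + 1)) by (unfold r; field; lra).
    apply mul_div_succ_le; lra. }
  assert (T5 : c / r ^ 2 * D <= e).
  { destruct (Rle_dec 0 D).
    - eapply Rle_trans; [apply Rmult_le_compat_l; [apply Rdiv_le_0_compat; lra | exact HD]|].
      replace (c / r ^ 2 * (e * r ^ 2 / (c + 1))) with (c * (e / (c + 1))) by (field; lra).
      apply mul_div_succ_le; lra.
    - assert (0 <= c / r ^ 2) by (apply Rdiv_le_0_compat; lra). nra. }
  unfold e in *. nra.
Qed.

Lemma ceil_nat_spec x : 0 < x -> (1 <= ceil_nat x)%nat /\ x <= INR (ceil_nat x) < x + 1.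
Proof.
  intros Hx. unfold ceil_nat. destruct (archimed (- x)) as [H1 H2].
  assert (Ez : IZR (1 - up (- x)) = 1 - IZR (up (- x))) by (rewrite minus_IZR; reflexivity).
  assert (Hpos : (0 < 1 - up (- x))%Z) by (apply lt_IZR; lra).
  rewrite INR_IZR_INZ, Z2Nat.id by lia. split; [lia | lra].
Qed.

Definition uni_cells (a b delta : R) : nat := ceil_nat ((b - a) / delta).

Definition uni_point (a b delta : R) (i : nat) : R := Rmin (a + INR i * delta) b.

Section UniformPartition.

Variables a b delta : R.
Hypothesis Hab : a < b.
Hypothesis Hdelta : 0 < delta.

Lemma uni_cells_spec : (1 <= uni_cells a b delta)%nat /\
  b - a <= INR (uni_cells a b delta) * delta < b - a + delta.
Proof.
  destruct (ceil_nat_spec ((b - a) / delta) ltac:(apply Rdiv_lt_0_compat; lra)) as [H1 [H2 H3]].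
  fold (uni_cells a b delta) in *. split; [exact H1|].
  apply (Rmult_le_compat_r delta) in H2; [|lra]. apply (Rmult_lt_compat_r delta) in H3; [|lra].
  replace ((b - a) / delta * delta) with (b - a) in H2 by (field; lra).
  replace (((b - a) / delta + 1) * delta) with (b - a + delta) in H3 by (field; lra).
  split; lra.
Qed.

Lemma uni_point_interior i : (i < uni_cells a b delta)%nat ->
  uni_point a b delta i = a + INR i * delta.
Proof.
  intros Hi. unfold uni_point. apply Rmin_left. destruct uni_cells_spec as [_ [_ H]].
  assert (INR i + 1 <= INR (uni_cells a b delta)) by (rewrite <- S_INR; apply le_INR; lia).
  nra.
Qed.

Lemma uni_point_partition : is_partition a b (uni_cells a b delta) (uni_point a b delta).
Proof.
  destruct uni_cells_spec as [_ [Hn1 Hn2]]. split; [|split].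
  - unfold uni_point. simpl. rewrite Rmult_0_l, Rplus_0_r. apply Rmin_left; lra.
  - unfold uni_point. apply Rmin_right. lra.
  - intros i Hi. rewrite uni_point_interior by auto. unfold uni_point. rewrite S_INR.
    apply Rmin_glb_lt; [lra|].
    assert (INR i + 1 <= INR (uni_cells a b delta)) by (rewrite <- S_INR; apply le_INR; lia).
    nra.
Qed.

Lemma uni_cell_width i : (i < uni_cells a b delta)%nat ->
  uni_point a b delta (S i) - uni_point a b delta i <= delta /\
  ((S i < uni_cells a b delta)%nat -> uni_point a b delta (S i) - uni_point a b delta i = delta).
Proof.
  intros Hi. rewrite (uni_point_interior i) by auto. split.
  - unfold uni_point. rewrite S_INR. pose proof (Rmin_l (a + (INR i + 1) * delta) b). lra.
  - intros HS. rewrite uni_point_interior, S_INR by auto. ring.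
Qed.

End UniformPartition.

Definition uni_mid (a b delta : R) (i : nat) : R :=
  (uni_point a b delta i + uni_point a b delta (S i)) / 2.

Definition uni_entropy (g : R -> R) (a b delta : R) : R :=
  entropy_nats (uni_cells a b delta) (cell_mass g (uni_point a b delta)).

Definition uni_distortion (g : R -> R) (a b delta : R) : R :=
  partition_distortion (uni_cells a b delta) g (uni_point a b delta) (uni_mid a b delta).

Section UniformDensity.

Variables (g : R -> R) (a b : R).
Hypothesis Hg : cont_density g a b.

Let g_cont : continuity g := proj1 (proj2 Hg).
Let g_ge0 : forall x, 0 <= g x := proj1 (proj2 (proj2 Hg)).
Let Hab : a < b := proj1 Hg.
Let g_pos : forall u v, a <= u -> u < v -> v <= b -> 0 < RInt g u v :=
  proj2 (proj2 (proj2 (proj2 Hg))).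

Lemma RInt_near_value u v w eta t : unif_modulus g a b eta w ->
  a <= u -> u < v -> v <= b -> v - u < eta -> u <= t <= v ->
  (g t - w) * (v - u) <= RInt g u v <= (g t + w) * (v - u).
Proof.
  intros Hmod Hau Huv Hvb Hve Ht.
  assert (Hpt : forall s, u <= s <= v -> g t - w <= g s <= g t + w).
  { intros s Hs.
    assert (Hclose : Rabs (g s - g t) < w) by (apply Hmod; try lra; apply Rabs_def1; lra).
    apply Rabs_def2 in Hclose. lra. }
  split; [apply RInt_ge_const | apply RInt_le_const]; auto; try lra;
    intros s Hs; apply Hpt; auto.
Qed.

Lemma cell_moment_mid_le u v w eta delta : unif_modulus g a b eta w ->
  a <= u -> u < v -> v <= b -> v - u < eta -> v - u <= delta ->
  RInt (fun s => (s - (u + v) / 2) ^ 2 * g s) u v <= (RInt g u v + w * (v - u)) * delta ^ 2 / 12.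
Proof.
  intros Hmod Hau Huv Hvb Hve Hvd.
  set (p := RInt g u v : R). set (D := v - u).
  assert (HD : 0 < D) by (unfold D; lra).
  assert (Hw : 0 <= w)
    by (specialize (Hmod u u ltac:(lra) ltac:(lra)); rewrite !Rminus_diag, Rabs_R0 in Hmod; lra).
  assert (Hb : forall s, u <= s <= v -> g s <= p / D + w).
  { intros s Hs. destruct (RInt_near_value u v w eta s Hmod Hau Huv Hvb Hve Hs) as [H1 _].
    fold p D in H1. apply (Rmult_le_reg_r D); auto.
    replace ((p / D + w) * D) with (p + w * D) by (field; lra). nra. }
  eapply Rle_trans.
  - apply (RInt_le_cont _ (fun s => (p / D + w) * (s - (u + v) / 2) ^ 2));
      [lra | solve_continuity | solve_continuity |].
    intros s Hs. pose proof (Hb s Hs). pose proof (pow2_ge_0 (s - (u + v) / 2)). nra.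
  - rewrite RInt_scal_cont, RInt_sq_mid by solve_continuity. fold D.
    replace ((p / D + w) * (D ^ 3 / 12)) with ((p + w * D) * D ^ 2 / 12) by (field; lra).
    assert (0 <= p) by (apply RInt_ge0_cont; auto; lra).
    assert (D ^ 2 <= delta ^ 2) by (apply pow_incr; unfold D; lra).
    assert (0 <= p + w * D) by nra.
    unfold Rdiv. apply Rmult_le_compat_r; [lra|]. apply Rmult_le_compat_l; auto.
Qed.

Lemma cell_entropy_full_le u v w eta delta M th eps : unif_modulus g a b eta w ->
  a <= u -> u < v -> v <= b -> v - u < eta -> v - u = delta ->
  (forall x, a <= x <= b -> g x <= M) -> w < th ->
  unif_modulus neg_xlnx 0 M th eps ->
  delta * neg_xlnx (RInt g u v / delta) <= RInt (fun s => neg_xlnx (g s)) u v + eps * delta.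
Proof.
  intros Hmod Hau Huv Hvb Hve Hvd HM Hth Hent.
  set (p := RInt g u v : R). subst delta.
  assert (Hpt : forall t, u <= t <= v -> neg_xlnx (p / (v - u)) <= neg_xlnx (g t) + eps).
  { intros t Ht. destruct (RInt_near_value u v w eta t Hmod Hau Huv Hvb Hve Ht) as [H1 H2].
    fold p in H1, H2.
    assert (Havg : g t - w <= p / (v - u) <= g t + w).
    { split; apply (Rmult_le_reg_r (v - u)); try lra;
        replace (p / (v - u) * (v - u)) with p by (field; lra); lra. }
    assert (Hrange : 0 <= p / (v - u) <= M).
    { split; [apply Rdiv_le_0_compat; [apply RInt_ge0_cont; auto; lra | lra]|].
      apply (Rmult_le_reg_r (v - u)); [lra|].
      replace (p / (v - u) * (v - u)) with p by (field; lra).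
      apply RInt_le_const; auto; [lra | intros; apply HM; lra]. }
    assert (Hclose : Rabs (neg_xlnx (p / (v - u)) - neg_xlnx (g t)) < eps)
      by (apply Hent; auto; [split; auto; apply HM; lra | apply Rabs_def1; lra]).
    apply Rabs_def2 in Hclose. lra. }
  rewrite <- RInt_const_R.
  replace (RInt (fun s => neg_xlnx (g s)) u v + eps * (v - u))
    with (RInt (fun s => neg_xlnx (g s) + eps) u v)
    by (rewrite RInt_plus_cont, RInt_const_R by solve_continuity; simpl; ring).
  apply RInt_le_cont; [lra | solve_continuity | solve_continuity | auto].
Qed.

Lemma cell_entropy_last_le u v delta M : a <= u -> u < v -> v <= b -> v - u <= delta ->
  (forall x, a <= x <= b -> g x <= M) ->
  delta * neg_xlnx (RInt g u v / delta) <= RInt (fun s => neg_xlnx (g s)) u v + (2 + M * M) * delta.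
Proof.
  intros Hau Huv Hvb Hvd HM.
  assert (Hp : 0 <= RInt g u v) by (apply RInt_ge0_cont; auto; lra).
  assert (neg_xlnx (RInt g u v / delta) <= 2) by (apply neg_xlnx_le_2, Rdiv_le_0_compat; lra).
  assert (- (M * M) * (v - u) <= RInt (fun s => neg_xlnx (g s)) u v).
  { apply RInt_ge_const; [lra | solve_continuity |].
    intros s Hs. apply neg_xlnx_ge. split; auto. apply HM; lra. }
  assert (0 <= M * M) by nra. nra.
Qed.

Lemma uni_mass_bounds delta M i : 0 < delta -> (forall x, a <= x <= b -> g x <= M) ->
  (i < uni_cells a b delta)%nat -> 0 < cell_mass g (uni_point a b delta) i <= M * delta.
Proof.
  intros Hd HM Hi. unfold cell_mass.
  destruct (is_partition_cell a b _ _ i (uni_point_partition a b delta Hab Hd) Hi)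
    as [Hlo [Hlt Hhi]].
  destruct (uni_cell_width a b delta Hab Hd i Hi) as [Hw _].
  split; [apply g_pos; auto|].
  assert (0 <= M) by (pose proof (g_ge0 a); pose proof (HM a ltac:(lra)); lra).
  eapply Rle_trans; [apply RInt_le_const; auto; [lra | intros; apply HM; lra]|].
  apply Rmult_le_compat_l; lra.
Qed.

Lemma uni_distortion_le delta w eta : 0 < delta -> delta < eta -> unif_modulus g a b eta w ->
  uni_distortion g a b delta <= (1 + w * (b - a)) * delta ^ 2 / 12.
Proof.
  intros Hd He Hmod. pose proof (uni_point_partition a b delta Hab Hd) as Hp.
  unfold uni_distortion, partition_distortion, uni_mid. set (x := uni_point a b delta) in *.
  eapply Rle_trans.
  - apply (rsum_le _ _ (fun i => (cell_mass g x i + w * (x (S i) - x i)) * delta ^ 2 / 12)).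
    intros i Hi. destruct (is_partition_cell a b _ _ i Hp Hi) as [Hlo [Hlt Hhi]].
    destruct (uni_cell_width a b delta Hab Hd i Hi) as [Hw _]. fold x in Hw.
    apply cell_moment_mid_le with (eta := eta); auto; lra.
  - rewrite (rsum_ext _ _ (fun i => (delta ^ 2 / 12) * cell_mass g x i
                                   + (w * delta ^ 2 / 12) * (x (S i) - x i))) by (intros; field).
    rewrite rsum_plus, !rsum_scal, rsum_telescope, (rsum_cell_mass g a b _ _ Hg Hp).
    destruct Hp as [-> [-> _]]. right; field.
Qed.

Lemma uni_entropy_le delta w eta M th eps : 0 < delta -> delta < eta -> 0 <= eps ->
  unif_modulus g a b eta w -> (forall x, a <= x <= b -> g x <= M) -> w < th ->
  unif_modulus neg_xlnx 0 M th eps ->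
  uni_entropy g a b delta <= diff_entropy g a b - ln delta + eps * (b - a) + (2 + M * M) * delta.
Proof.
  intros Hd He Heps Hmod HM Hth Hent.
  pose proof (uni_point_partition a b delta Hab Hd) as Hp.
  destruct (uni_cells_spec a b delta Hab Hd) as [Hn1 [_ Hn2]].
  unfold uni_entropy.
  rewrite (entropy_nats_rescale _ _ delta (cell_mass_distribution g a b _ _ Hg Hp) Hd),
    (diff_entropy_rsum g a b _ _ g_cont Hp).
  set (x := uni_point a b delta) in *.
  set (ent := fun i => RInt (fun s => neg_xlnx (g s)) (x i) (x (S i))).
  (* all cells but the last have length exactly [delta] *)
  destruct (uni_cells a b delta) as [|m] eqn:Em; [lia|]. cbn [rsum].
  assert (Hfull : rsum m (fun i => delta * neg_xlnx (cell_mass g x i / delta))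
                  <= rsum m (fun i => ent i + eps * delta)).
  { apply rsum_le. intros i Hi.
    destruct (is_partition_cell a b _ _ i Hp ltac:(lia)) as [Hlo [Hlt Hhi]].
    destruct (uni_cell_width a b delta Hab Hd i ltac:(lia)) as [_ Hwfull].
    specialize (Hwfull ltac:(lia)). fold x in Hwfull.
    apply cell_entropy_full_le with (w := w) (eta := eta) (M := M) (th := th); auto; lra. }
  rewrite rsum_plus, rsum_const in Hfull.
  assert (Hlast : delta * neg_xlnx (cell_mass g x m / delta) <= ent m + (2 + M * M) * delta).
  { destruct (is_partition_cell a b _ _ m Hp ltac:(lia)) as [Hlo [Hlt Hhi]].
    destruct (uni_cell_width a b delta Hab Hd m ltac:(lia)) as [Hw _]. fold x in Hw.
    apply cell_entropy_last_le; auto. }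
  assert (INR m * delta <= b - a) by (rewrite S_INR in Hn2; lra).
  assert (INR m * (eps * delta) <= eps * (b - a))
    by (replace (INR m * (eps * delta)) with (eps * (INR m * delta)) by ring;
        apply Rmult_le_compat_l; auto).
  lra.
Qed.

Lemma uni_entropy_ge delta M : 0 < delta -> 0 < M -> (forall x, a <= x <= b -> g x <= M) ->
  - ln (M * delta) <= uni_entropy g a b delta.
Proof.
  intros Hd HM HMb. pose proof (uni_point_partition a b delta Hab Hd) as Hp.
  unfold uni_entropy, entropy_nats.
  rewrite <- (Rmult_1_r (- ln (M * delta))), <- (rsum_cell_mass g a b _ _ Hg Hp), <- rsum_scal.
  apply rsum_le. intros i Hi. destruct (uni_mass_bounds delta M i Hd HMb Hi) as [P1 P2].
  assert (ln (cell_mass g (uni_point a b delta) i) <= ln (M * delta)) by (apply ln_le; auto).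
  unfold neg_xlnx. nra.
Qed.

Lemma uni_log_spread_le delta M : 0 < delta -> (forall x, a <= x <= b -> g x <= M) ->
  rsum (uni_cells a b delta) (fun i =>
    cell_mass g (uni_point a b delta) i * (ln (cell_mass g (uni_point a b delta) i) - ln delta) ^ 2)
  <= (b - a + delta) * (4 + M ^ 3).
Proof.
  intros Hd HMb.
  assert (HM : 0 <= M) by (pose proof (g_ge0 a); pose proof (HMb a ltac:(lra)); lra).
  eapply Rle_trans.
  - apply (rsum_le _ _ (fun _ => delta * (4 + M ^ 3))).
    intros i Hi. destruct (uni_mass_bounds delta M i Hd HMb Hi) as [P1 P2].
    set (p := cell_mass g (uni_point a b delta) i) in *.
    rewrite <- ln_div by lra.
    replace (p * ln (p / delta) ^ 2) with (delta * (p / delta * ln (p / delta) ^ 2))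
      by (field; lra).
    apply Rmult_le_compat_l; [lra|]. apply xln2x_le. split; [apply Rlt_le, Rdiv_lt_0_compat; auto|].
    apply (Rmult_le_reg_r delta); auto. replace (p / delta * delta) with p by (field; lra). lra.
  - rewrite rsum_const. destruct (uni_cells_spec a b delta Hab Hd) as [_ [_ H]].
    pose proof (pow_le M 3 HM).
    rewrite <- Rmult_assoc.
    apply Rmult_le_compat_r; lra.
Qed.

End UniformDensity.

Definition mean_len (n : nat) (p l : nat -> R) : R := rsum n (fun i => p i * l i).
Definition mean_sq_len (n : nat) (p l : nat -> R) : R := rsum n (fun i => p i * l i ^ 2).
Definition zw_aoi (n : nat) (p l : nat -> R) : R :=
  mean_sq_len n p l / (2 * mean_len n p l) + mean_len n p l.

Definition kraft (n : nat) (l : nat -> R) : Prop :=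
  (forall i, (i < n)%nat -> 0 < l i) /\ rsum n (fun i => Rpower 2 (- l i)) <= 1.

Section Codes.

Variables (n : nat) (p : nat -> R).
Hypothesis Hp : is_distribution n p.

Lemma mean_len_ge_entropy l : kraft n l -> entropy_nats n p / ln 2 <= mean_len n p l.
Proof.
  intros [Hl K]. destruct Hp as [Hp0 S1]. pose proof ln_2_pos.
  assert (Hsum : rsum n (fun i => / ln 2 * (p i - Rpower 2 (- l i)))
                 <= rsum n (fun i => p i * l i - / ln 2 * neg_xlnx (p i))).
  { apply rsum_le. intros i Hi. unfold neg_xlnx.
    pose proof (gibbs_ineq (p i) (Rpower 2 (- l i)) (Hp0 i Hi) (exp_pos _)) as G.
    unfold Rpower in *. rewrite ln_exp in G.
    apply (Rmult_le_reg_r (ln 2)); auto.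
    replace (/ ln 2 * (p i - exp (- l i * ln 2)) * ln 2) with (p i - exp (- l i * ln 2))
      by (field; lra).
    replace ((p i * l i - / ln 2 * - (p i * ln (p i))) * ln 2)
      with (p i * (ln (p i) - - l i * ln 2)) by (field; lra).
    exact G. }
  rewrite rsum_scal, !rsum_minus, rsum_scal, S1 in Hsum.
  assert (0 <= / ln 2 * (1 - rsum n (fun i => Rpower 2 (- l i))))
    by (apply Rmult_le_pos; [apply Rlt_le, Rinv_0_lt_compat|]; lra).
  unfold entropy_nats, mean_len, Rdiv. lra.
Qed.

Lemma mean_len_sq_le l : mean_len n p l ^ 2 <= mean_sq_len n p l.
Proof.
  destruct Hp as [Hp0 S1]. set (E := mean_len n p l).
  assert (Hvar : 0 <= rsum n (fun i => p i * (l i - E) ^ 2))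
    by (apply rsum_nonneg; intros; apply Rmult_le_pos; auto; apply pow2_ge_0).
  rewrite (rsum_ext _ _ (fun i => p i * l i ^ 2 + (-2 * E) * (p i * l i) + E ^ 2 * p i)) in Hvar
    by (intros; ring).
  rewrite !rsum_plus, !rsum_scal, S1 in Hvar. fold (mean_len n p l) E in Hvar.
  unfold mean_sq_len. nra.
Qed.

Lemma mean_len_pos l : (forall i, (i < n)%nat -> 0 < l i) -> 0 < mean_len n p l.
Proof.
  intros Hl. destruct Hp as [Hp0 S1].
  assert (exists j, (j < n)%nat /\ 0 < p j) as [j [Hj Hpj]].
  { apply Classical_Prop.NNPP. intros Hno.
    assert (Hle : rsum n p <= rsum n (fun _ => 0)).
    { apply rsum_le. intros i Hi. destruct (Rle_dec (p i) 0); auto.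
      exfalso; apply Hno; exists i; split; auto; lra. }
    rewrite rsum_const in Hle. lra. }
  assert (p j * l j <= mean_len n p l)
    by (apply (rsum_term_le n (fun i => p i * l i)); auto;
        intros; apply Rmult_le_pos; [apply Hp0 | apply Rlt_le, Hl]; auto).
  pose proof (Hl j Hj). nra.
Qed.

Lemma zw_aoi_ge_entropy l : kraft n l -> 3/2 * (entropy_nats n p / ln 2) <= zw_aoi n p l.
Proof.
  intros K. pose proof (mean_len_ge_entropy l K). pose proof (mean_len_sq_le l).
  pose proof (mean_len_pos l (proj1 K)). unfold zw_aoi. set (E := mean_len n p l) in *.
  assert (E / 2 <= mean_sq_len n p l / (2 * E)).
  { apply (Rmult_le_reg_r (2 * E)); [lra|].
    replace (mean_sq_len n p l / (2 * E) * (2 * E)) with (mean_sq_len n p l) by (field; lra).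
    replace (E / 2 * (2 * E)) with (E ^ 2) by field. auto. }
  lra.
Qed.

(* The Shannon code [l i = - log2 (p i)] has mean length [H / ln 2]; its second
   moment exceeds [(H / ln 2) ^ 2] by [Var (ln p) / ln 2 ^ 2], and the variance is
   at most the second moment of [ln p] about any centre [t]. *)
Lemma shannon_code_zw_aoi t V : (forall i, (i < n)%nat -> 0 < p i < 1) ->
  rsum n (fun i => p i * (ln (p i) - t) ^ 2) <= V -> 0 < entropy_nats n p ->
  kraft n (fun i => - log2 (p i)) /\
  zw_aoi n p (fun i => - log2 (p i))
  <= 3/2 * (entropy_nats n p / ln 2) + V / (2 * entropy_nats n p * ln 2).
Proof.
  intros Hp01 HV HH. destruct Hp as [_ S1]. pose proof ln_2_pos as Hln2.
  unfold log2. split; [split|].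
  - intros i Hi. destruct (Hp01 i Hi). pose proof (ln_increasing (p i) 1 ltac:(lra) ltac:(lra)).
    rewrite ln_1 in *. apply Ropp_0_gt_lt_contravar, Rdiv_neg_pos; lra.
  - rewrite (rsum_ext _ _ p); [lra|]. intros i Hi. unfold Rpower. rewrite Ropp_involutive.
    replace (ln (p i) / ln 2 * ln 2) with (ln (p i)) by (field; lra).
    apply exp_ln, Hp01, Hi.
  - set (H := entropy_nats n p) in *. set (S2 := rsum n (fun i => p i * ln (p i) ^ 2)).
    assert (EL : mean_len n p (fun i => - (ln (p i) / ln 2)) = H / ln 2).
    { unfold mean_len, H, entropy_nats, neg_xlnx, Rdiv.
      rewrite <- (Rmult_comm (/ ln 2)), <- rsum_scal.
      apply rsum_ext. intros. ring. }
    assert (EL2 : mean_sq_len n p (fun i => - (ln (p i) / ln 2)) = S2 / ln 2 ^ 2).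
    { unfold mean_sq_len, S2, Rdiv. rewrite <- (Rmult_comm (/ ln 2 ^ 2)), <- rsum_scal.
      apply rsum_ext. intros. field. lra. }
    assert (Hvar : S2 - H ^ 2 <= V).
    { rewrite (rsum_ext _ _ (fun i => p i * ln (p i) ^ 2 + (- 2 * t) * - neg_xlnx (p i)
                                       + t ^ 2 * p i)) in HV by (intros; unfold neg_xlnx; ring).
      rewrite !rsum_plus, !rsum_scal, rsum_opp, S1 in HV. fold S2 in HV.
      pose proof (pow2_ge_0 (H + t)). unfold H, entropy_nats in *. nra. }
    unfold zw_aoi. rewrite EL, EL2.
    replace (S2 / ln 2 ^ 2 / (2 * (H / ln 2)) + H / ln 2)
      with (S2 / (2 * H * ln 2) + H / ln 2) by (field; lra).
    assert (Hmom : S2 / (2 * H * ln 2) <= (H ^ 2 + V) / (2 * H * ln 2))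
      by (unfold Rdiv; apply Rmult_le_compat_r; [apply Rlt_le, Rinv_0_lt_compat; nra | lra]).
    replace ((H ^ 2 + V) / (2 * H * ln 2)) with (1/2 * (H / ln 2) + V / (2 * H * ln 2))
      in Hmom by (field; lra).
    lra.
Qed.

Lemma constant_code_kraft : (1 <= n)%nat -> kraft n (fun _ => ln (INR n) / ln 2 + 1).
Proof.
  intros Hn. pose proof ln_2_pos.
  assert (1 <= INR n) by (replace 1 with (INR 1) by reflexivity; apply le_INR; auto).
  assert (0 <= ln (INR n) / ln 2) by (apply Rdiv_le_0_compat; [apply ln_ge_0|]; lra).
  split; [intros; lra|].
  rewrite rsum_const. unfold Rpower.
  replace (- (ln (INR n) / ln 2 + 1) * ln 2) with (- (ln (INR n) + ln 2)) by (field; lra).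
  rewrite <- ln_mult, exp_Ropp, exp_ln by lra.
  replace (INR n * / (INR n * 2)) with (/ 2) by (field; lra). lra.
Qed.

End Codes.

Lemma RInt_pos_of_pos_point g u v y : continuity g -> (forall x, 0 <= g x) ->
  u < y < v -> 0 < g y -> 0 < RInt g u v.
Proof.
  intros Hc Hg0 Hy Hgy.
  destruct (Hc y (g y / 2) ltac:(lra)) as [rho [Hrho Hnear]].
  set (r := Rmin (rho / 2) (Rmin ((y - u) / 2) ((v - y) / 2))).
  assert (Hr0 : 0 < r) by (unfold r; repeat apply Rmin_pos; lra).
  assert (Hr1 : r <= rho / 2) by apply Rmin_l.
  assert (Hr2 : r <= (y - u) / 2) by (eapply Rle_trans; [apply Rmin_r | apply Rmin_l]).
  assert (Hr3 : r <= (v - y) / 2) by (eapply Rle_trans; [apply Rmin_r | apply Rmin_r]).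
  assert (Hmid : (y + r - (y - r)) * (g y / 2) <= RInt g (y - r) (y + r)).
  { rewrite Rmult_comm. apply RInt_ge_const; auto; [lra|].
    intros z Hz. destruct (Req_dec z y) as [->|Hzy]; [lra|].
    assert (Hclose : R_dist (g z) (g y) < g y / 2).
    { apply Hnear. split; [split; [constructor | auto]|].
      simpl. unfold R_dist. apply Rabs_def1; lra. }
    unfold R_dist in Hclose. apply Rabs_def2 in Hclose. lra. }
  assert (0 <= RInt g u (y - r)) by (apply RInt_ge0_cont; auto; lra).
  assert (0 <= RInt g (y + r) v) by (apply RInt_ge0_cont; auto; lra).
  rewrite <- (RInt_Chasles g u (y - r) v), <- (RInt_Chasles g (y - r) (y + r) v)
    by (apply ex_RInt_continuity; auto).
  unfold plus; simpl. nra.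
Qed.

Lemma ball_R (y z e : R) : ball y e z <-> Rabs (z - y) < e.
Proof. unfold ball; simpl; unfold AbsRing_ball, abs, minus, plus, opp; simpl. tauto. Qed.

Definition clamp (a b x : R) : R := Rmax a (Rmin x b).

Lemma clamp_in a b x : a <= b -> a <= clamp a b x <= b.
Proof. intros. unfold clamp. split; [apply Rmax_l | apply Rmax_lub; [lra | apply Rmin_r]]. Qed.

Lemma clamp_id a b x : a <= x <= b -> clamp a b x = x.
Proof. intros. unfold clamp. rewrite Rmin_left, Rmax_right by lra. reflexivity. Qed.

Lemma clamp_lipschitz a b x y : a <= b -> Rabs (clamp a b x - clamp a b y) <= Rabs (x - y).
Proof.
  intros. unfold clamp, Rmax, Rmin.
  destruct (Rle_dec x b); destruct (Rle_dec y b);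
  repeat match goal with |- context [Rle_dec ?u ?v] => destruct (Rle_dec u v) end;
  unfold Rabs; repeat match goal with |- context [Rcase_abs ?u] => destruct (Rcase_abs u) end; lra.
Qed.

(* Extending [f] by its boundary values gives a function continuous on [R] that
   agrees with [f] on [a, b], the only values the statement depends on. *)
Definition clamp_ext (f : R -> R) (a b : R) (x : R) : R := f (clamp a b x).

Lemma continuity_clamp_ext f a b : a <= b ->
  (forall x, a <= x <= b ->
     filterlim f (within (fun y => a <= y <= b) (locally x)) (locally (f x))) ->
  continuity (clamp_ext f a b).
Proof.
  intros Hab Hf x eps Heps. pose proof (clamp_in a b x Hab) as Hx.
  destruct (proj1 (filterlim_locally _ _) (Hf _ Hx) (mkposreal eps Heps)) as [del Hdel].
  exists del. split; [apply cond_pos|]. intros z [_ Hz]. simpl in *. unfold R_dist in *.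
  apply (Hdel (clamp a b z)); [apply ball_R | apply clamp_in; lra].
  eapply Rle_lt_trans; [apply clamp_lipschitz; lra | exact Hz].
Qed.

Lemma pdf_cont_density f a b : pdf_on f a b -> condA f a b -> cont_density (clamp_ext f a b) a b.
Proof.
  intros [Hab [Hf0 [Hsup [_ H1]]]] [Hcont _].
  assert (Hc : continuity (clamp_ext f a b)) by (apply continuity_clamp_ext; auto; lra).
  assert (Heq : forall x, a <= x <= b -> clamp_ext f a b x = f x)
    by (intros; unfold clamp_ext; rewrite clamp_id; auto).
  split; [auto | split; [auto | split; [intros; apply Hf0 | split]]].
  - rewrite <- H1. apply RInt_ext. intros x Hx.
    rewrite Rmin_left, Rmax_right in Hx by lra. apply Heq; lra.
  - intros u v Hau Huv Hvb.
    destruct (proj2 (Hsup ((u + v) / 2)) ltac:(lra) ((v - u) / 2) ltac:(lra)) as [y [Hy Hfy]].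
    apply Rabs_def2 in Hy.
    apply (RInt_pos_of_pos_point _ u v y Hc (fun x => Hf0 _)); [lra|].
    rewrite Heq by lra. pose proof (Hf0 y). lra.
Qed.

Lemma Glb_Rbar_real_bounds (E : R -> Prop) L y : E y -> (forall z, E z -> L <= z) ->
  L <= real (Glb_Rbar E) <= y.
Proof.
  intros Ey Hlb. destruct (Glb_Rbar_correct E) as [H1 H2].
  assert (A1 : Rbar_le (Glb_Rbar E) y) by (apply H1; auto).
  assert (A2 : Rbar_le L (Glb_Rbar E)) by (apply H2; intros z Hz; apply Hlb; auto).
  destruct (Glb_Rbar E); simpl in *; try contradiction. split; auto.
Qed.

Lemma quantizer_partition a b Q : is_quantizer a b Q -> is_partition a b (qn Q) (qa Q).
Proof. intros [_ H]. exact H. Qed.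

Section Quantizers.

Variables (f : R -> R) (a b : R) (Q : quantizer).
Hypothesis HQ : is_quantizer a b Q.

Lemma RInt_cell_clamp_ext (h : R -> R -> R) i : (i < qn Q)%nat ->
  RInt (fun x => h x (f x)) (qa Q i) (qa Q (S i))
  = RInt (fun x => h x (clamp_ext f a b x)) (qa Q i) (qa Q (S i)).
Proof.
  intros Hi.
  destruct (is_partition_cell a b _ _ i (quantizer_partition a b Q HQ) Hi) as [Hlo [Hlt Hhi]].
  apply RInt_ext. intros t Ht. rewrite Rmin_left, Rmax_right in Ht by lra.
  unfold clamp_ext. rewrite clamp_id by lra. reflexivity.
Qed.

Lemma cellp_clamp_ext i : (i < qn Q)%nat -> cellp f Q i = cell_mass (clamp_ext f a b) (qa Q) i.
Proof. intros Hi. exact (RInt_cell_clamp_ext (fun _ y => y) i Hi). Qed.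

Lemma distortion_clamp_ext :
  distortion f Q = partition_distortion (qn Q) (clamp_ext f a b) (qa Q) (qc Q).
Proof.
  unfold distortion, partition_distortion. apply rsum_ext. intros i Hi.
  exact (RInt_cell_clamp_ext (fun x y => (x - qc Q i) ^ 2 * y) i Hi).
Qed.

Lemma AoI_zw_clamp_ext l : AoI_zw f Q l = zw_aoi (qn Q) (cell_mass (clamp_ext f a b) (qa Q)) l.
Proof.
  unfold AoI_zw, EL, EL2, zw_aoi, mean_len, mean_sq_len.
  rewrite (rsum_ext _ (fun i => cellp f Q i * l i ^ 2)
                     (fun i => cell_mass (clamp_ext f a b) (qa Q) i * l i ^ 2)),
    (rsum_ext _ (fun i => cellp f Q i * l i) (fun i => cell_mass (clamp_ext f a b) (qa Q) i * l i));
    [reflexivity | |]; intros i Hi; rewrite cellp_clamp_ext; auto.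
Qed.

End Quantizers.

Section OptimalCode.

Variables (f : R -> R) (a b : R) (Q : quantizer).
Hypothesis Hg : cont_density (clamp_ext f a b) a b.
Hypothesis HQ : is_quantizer a b Q.

Let Hdist : is_distribution (qn Q) (cell_mass (clamp_ext f a b) (qa Q)) :=
  cell_mass_distribution _ a b _ _ Hg (quantizer_partition a b Q HQ).

Lemma AoI_zw_ge_entropy l : is_code Q l ->
  3/2 * (entropy_nats (qn Q) (cell_mass (clamp_ext f a b) (qa Q)) / ln 2) <= AoI_zw f Q l.
Proof.
  intros Hl. rewrite (AoI_zw_clamp_ext f a b Q HQ).
  exact (zw_aoi_ge_entropy _ _ Hdist l Hl).
Qed.

Lemma AoI_opt_ge_entropy :
  3/2 * (entropy_nats (qn Q) (cell_mass (clamp_ext f a b) (qa Q)) / ln 2) <= AoI_opt f Q.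
Proof.
  set (l := fun _ : nat => ln (INR (qn Q)) / ln 2 + 1).
  assert (Hl : is_code Q l) by exact (constant_code_kraft (qn Q) (proj1 HQ)).
  refine (proj1 (Glb_Rbar_real_bounds _ _ (AoI_zw f Q l) _ _)); [exists l; auto|].
  intros z [l' [Hl' ->]]. now apply AoI_zw_ge_entropy.
Qed.

Lemma AoI_opt_le_code l : is_code Q l -> AoI_opt f Q <= AoI_zw f Q l.
Proof.
  intros Hl.
  refine (proj2 (Glb_Rbar_real_bounds _
    (3/2 * (entropy_nats (qn Q) (cell_mass (clamp_ext f a b) (qa Q)) / ln 2)) _ _ _));
    [exists l; auto|].
  intros z [l' [Hl' ->]]. now apply AoI_zw_ge_entropy.
Qed.

End OptimalCode.

Lemma at_right_0_lt r : 0 < r -> at_right 0 (fun delta => 0 < delta < r).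
Proof.
  intros Hr. exists (mkposreal r Hr). intros y Hy Hpos.
  pose proof (proj1 (ball_R 0 y r) Hy) as Hlt. rewrite Rminus_0_r, Rabs_right in Hlt by lra. lra.
Qed.

Section UniformAsymptotics.

Variables (g : R -> R) (a b : R).
Hypothesis Hg : cont_density g a b.

Let Hab : a < b := proj1 Hg.

Lemma uni_entropy_le_eventually eps : 0 < eps ->
  at_right 0 (fun delta => uni_entropy g a b delta <= diff_entropy g a b - ln delta + eps).
Proof.
  intros Heps. destruct (cont_density_bounded g a b Hg) as [M [HM HMb]].
  set (e := eps / 2 / (b - a)).
  assert (He : 0 < e) by (unfold e; apply Rdiv_lt_0_compat; lra).
  destruct (@Heine_cor1 neg_xlnx 0 M HM (fun y _ => continuity_neg_xlnx y) (mkposreal e He))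
    as [th [_ Hth]].
  pose proof (cond_pos th) as Hth0.
  destruct (cont_density_unif_modulus g a b (th / 2) Hg ltac:(lra)) as [eta [Heta Hmod]].
  assert (HM2 : 0 < 2 + M * M) by nra.
  apply (filter_imp (fun delta => 0 < delta < Rmin eta (eps / 2 / (2 + M * M)))).
  2: { apply at_right_0_lt. apply Rmin_pos; [lra | apply Rdiv_lt_0_compat; lra]. }
  intros delta [Hd Hlt]. pose proof (Rmin_l eta (eps / 2 / (2 + M * M))).
  pose proof (Rmin_r eta (eps / 2 / (2 + M * M))).
  pose proof (uni_entropy_le g a b Hg delta (th / 2) eta M th e Hd ltac:(lra) ltac:(lra) Hmod HMb
                ltac:(lra) Hth).
  assert (e * (b - a) = eps / 2) by (unfold e; field; lra).
  assert ((2 + M * M) * delta <= eps / 2).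
  { apply (Rmult_le_reg_r (/ (2 + M * M))); [apply Rinv_0_lt_compat; lra|].
    replace ((2 + M * M) * delta * / (2 + M * M)) with delta by (field; lra). lra. }
  lra.
Qed.

Lemma uni_distortion_le_eventually eps : 0 < eps ->
  at_right 0 (fun delta => uni_distortion g a b delta <= (1 + eps) * delta ^ 2 / 12).
Proof.
  intros Heps.
  destruct (cont_density_unif_modulus g a b (eps / (b - a)) Hg ltac:(apply Rdiv_lt_0_compat; lra))
    as [eta [Heta Hmod]].
  apply (filter_imp (fun delta => 0 < delta < eta)); [|now apply at_right_0_lt].
  intros delta [Hd Hlt].
  replace (1 + eps) with (1 + eps / (b - a) * (b - a)) by (field; lra).
  now apply uni_distortion_le with (eta := eta).
Qed.

Lemma uni_entropy_ge_eventually K : at_right 0 (fun delta => K <= uni_entropy g a b delta).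
Proof.
  destruct (cont_density_bounded g a b Hg) as [M [HM HMb]].
  apply (filter_imp (fun delta => 0 < delta < exp (- K) / M)).
  2: { apply at_right_0_lt, Rdiv_lt_0_compat; [apply exp_pos | lra]. }
  intros delta [Hd Hlt]. pose proof (uni_entropy_ge g a b Hg delta M Hd HM HMb).
  assert (ln (M * delta) < - K).
  { rewrite <- (ln_exp (- K)). apply ln_increasing; [nra|].
    apply (Rmult_lt_compat_l M) in Hlt; auto.
    replace (M * (exp (- K) / M)) with (exp (- K)) in Hlt by (field; lra). exact Hlt. }
  lra.
Qed.

Lemma uni_shannon_code_eventually eps : 0 < eps ->
  at_right 0 (fun delta => exists l, kraft (uni_cells a b delta) l /\
    zw_aoi (uni_cells a b delta) (cell_mass g (uni_point a b delta)) l
    <= 3/2 * (uni_entropy g a b delta / ln 2) + eps).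
Proof.
  intros Heps. destruct (cont_density_bounded g a b Hg) as [M [HM HMb]].
  pose proof ln_2_pos as Hln2.
  set (V := (b - a + 1) * (4 + M ^ 3)).
  assert (HV : 0 < V) by (unfold V; pose proof (pow_lt M 3 HM); apply Rmult_lt_0_compat; lra).
  set (K := V / (2 * eps * ln 2)).
  assert (HK : 0 < K) by (unfold K; apply Rdiv_lt_0_compat; nra).
  apply (filter_imp (fun delta => 0 < delta < Rmin 1 (/ M) /\ K <= uni_entropy g a b delta)).
  2: { apply filter_and; [apply at_right_0_lt, Rmin_pos; [lra | apply Rinv_0_lt_compat; lra]|].
       apply uni_entropy_ge_eventually. }
  intros delta [[Hd Hlt] HH]. pose proof (Rmin_l 1 (/ M)). pose proof (Rmin_r 1 (/ M)).
  pose proof (uni_point_partition a b delta Hab Hd) as Hp.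
  assert (HMd : M * delta < 1).
  { assert (Hlt' : delta < / M) by lra. apply (Rmult_lt_compat_l M) in Hlt'; [|lra].
    rewrite Rinv_r in Hlt' by lra. exact Hlt'. }
  assert (Hp01 : forall i, (i < uni_cells a b delta)%nat ->
                           0 < cell_mass g (uni_point a b delta) i < 1)
    by (intros i Hi; destruct (uni_mass_bounds g a b Hg delta M i Hd HMb Hi); split; lra).
  destruct (shannon_code_zw_aoi _ _ (cell_mass_distribution g a b _ _ Hg Hp) (ln delta)
              ((b - a + delta) * (4 + M ^ 3)) Hp01 (uni_log_spread_le g a b Hg delta M Hd HMb)
              ltac:(fold (uni_entropy g a b delta); lra)) as [Hkraft Hle].
  exists (fun i => - log2 (cell_mass g (uni_point a b delta) i)). split; [exact Hkraft|].
  fold (uni_entropy g a b delta) in Hle. eapply Rle_trans; [exact Hle|].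
  apply Rplus_le_compat_l. set (Hu := uni_entropy g a b delta) in *.
  assert (0 < 2 * Hu * ln 2) by nra.
  apply (Rmult_le_reg_r (2 * Hu * ln 2)); auto.
  replace ((b - a + delta) * (4 + M ^ 3) / (2 * Hu * ln 2) * (2 * Hu * ln 2))
    with ((b - a + delta) * (4 + M ^ 3)) by (field; lra).
  assert ((b - a + delta) * (4 + M ^ 3) <= V)
    by (unfold V; apply Rmult_le_compat_r; [pose proof (pow_lt M 3 HM); lra | lra]).
  assert (K * (2 * eps * ln 2) = V) by (unfold K; field; lra).
  nra.
Qed.

Lemma uni_entropy_minimal_eventually eps : 0 < eps ->
  at_right 0 (fun delta => forall n x cq, is_partition a b n x ->
    partition_distortion n g x cq <= uni_distortion g a b delta ->
    uni_entropy g a b delta - eps <= entropy_nats n (cell_mass g x)).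
Proof.
  intros Heps. set (e := eps / 3). assert (He : 0 < e) by (unfold e; lra).
  destruct (entropy_distortion_lower_bound g a b Hg e He) as [D0 [HD0 Hlow]].
  set (r := Rmin 1 (12 * D0 / (1 + 2 * e))).
  assert (Hr : 0 < r) by (apply Rmin_pos; [|apply Rdiv_lt_0_compat]; lra).
  apply (filter_imp (fun delta => 0 < delta < r /\
           uni_entropy g a b delta <= diff_entropy g a b - ln delta + e /\
           uni_distortion g a b delta <= (1 + 2 * e) * delta ^ 2 / 12)).
  2: { apply filter_and; [|apply filter_and];
       [ now apply at_right_0_lt
       | apply uni_entropy_le_eventually
       | apply uni_distortion_le_eventually ]; lra. }
  intros delta [[Hd Hlt] [HHu HDu]] n x cq Hp HD. unfold r in Hlt.
  assert (Hd1 : delta < 1) by (pose proof (Rmin_l 1 (12 * D0 / (1 + 2 * e))); lra).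
  assert (HdD0 : delta < 12 * D0 / (1 + 2 * e))
    by (pose proof (Rmin_r 1 (12 * D0 / (1 + 2 * e))); lra).
  assert (HDu0 : uni_distortion g a b delta <= D0).
  { apply (Rmult_lt_compat_l ((1 + 2 * e) / 12)) in HdD0; [|apply Rdiv_lt_0_compat; lra].
    replace ((1 + 2 * e) / 12 * (12 * D0 / (1 + 2 * e))) with D0 in HdD0 by (field; lra).
    assert ((1 + 2 * e) * delta ^ 2 / 12 <= (1 + 2 * e) / 12 * delta)
      by (replace ((1 + 2 * e) * delta ^ 2 / 12) with ((1 + 2 * e) / 12 * (delta * delta))
            by (simpl; field);
          apply Rmult_le_compat_l; [apply Rlt_le, Rdiv_lt_0_compat |]; nra).
    lra. }
  assert (Hlam : 0 < 6 / delta ^ 2) by (apply Rdiv_lt_0_compat; [lra | apply pow_lt; lra]).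
  pose proof (Hlow (6 / delta ^ 2) n x cq Hlam Hp ltac:(lra)) as Hbound.
  rewrite lagrangian_const_step in Hbound by lra.
  assert (Hpen : 6 / delta ^ 2 * partition_distortion n g x cq <= /2 + e).
  { replace (/2 + e) with (6 / delta ^ 2 * ((1 + 2 * e) * delta ^ 2 / 12)) by (field; lra).
    apply Rmult_le_compat_l; lra. }
  unfold e in *. lra.
Qed.

End UniformAsymptotics.

Lemma uni_quantizer_valid a b delta : a < b -> 0 < delta ->
  is_quantizer a b (uni_quantizer a b delta).
Proof.
  intros Hab Hd. destruct (uni_cells_spec a b delta Hab Hd) as [Hn _].
  destruct (uni_point_partition a b delta Hab Hd) as [H0 [Hn' Hs]]. repeat split; auto.
Qed.

Section AoIAsymptotics.

Variables (f : R -> R) (a b : R).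
Hypothesis Hg : cont_density (clamp_ext f a b) a b.

Lemma uni_AoI_opt_le_eventually eps : 0 < eps ->
  at_right 0 (fun delta => AoI_opt f (uni_quantizer a b delta)
                           <= 3/2 * (uni_entropy (clamp_ext f a b) a b delta / ln 2) + eps).
Proof.
  intros Heps. pose proof (at_right_0_lt 1 Rlt_0_1) as Hpos.
  pose proof (uni_shannon_code_eventually _ a b Hg eps Heps) as Hcode.
  generalize (filter_and _ _ Hpos Hcode). apply filter_imp. intros delta [[Hd _] [l [Hl Hup]]].
  pose proof (uni_quantizer_valid a b delta (proj1 Hg) Hd) as HU.
  eapply Rle_trans; [exact (AoI_opt_le_code f a b _ Hg HU l Hl)|].
  rewrite (AoI_zw_clamp_ext f a b _ HU). exact Hup.
Qed.

Lemma quantizer_AoI_opt_ge_eventually eps : 0 < eps ->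
  at_right 0 (fun delta => forall Q, is_quantizer a b Q ->
    distortion f Q <= distortion f (uni_quantizer a b delta) ->
    3/2 * (uni_entropy (clamp_ext f a b) a b delta / ln 2) - eps <= AoI_opt f Q).
Proof.
  intros Heps. pose proof ln_2_pos. pose proof (at_right_0_lt 1 Rlt_0_1) as Hpos.
  pose proof (uni_entropy_minimal_eventually _ a b Hg (2 / 3 * eps * ln 2) ltac:(nra)) as Hmin.
  generalize (filter_and _ _ Hpos Hmin). apply filter_imp. intros delta [[Hd _] Hlow] Q HQ HDQ.
  pose proof (uni_quantizer_valid a b delta (proj1 Hg) Hd) as HU.
  rewrite (distortion_clamp_ext f a b Q HQ), (distortion_clamp_ext f a b _ HU) in HDQ.
  pose proof (Hlow _ _ _ (quantizer_partition a b Q HQ) HDQ) as HHQ.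
  eapply Rle_trans; [|exact (AoI_opt_ge_entropy f a b Q Hg HQ)].
  replace (3/2 * (uni_entropy (clamp_ext f a b) a b delta / ln 2) - eps)
    with (3/2 * ((uni_entropy (clamp_ext f a b) a b delta - 2 / 3 * eps * ln 2) / ln 2))
    by (field; lra).
  apply Rmult_le_compat_l; [lra|]. unfold Rdiv.
  apply Rmult_le_compat_r; [apply Rlt_le, Rinv_0_lt_compat; lra | exact HHQ].
Qed.

End AoIAsymptotics.

Theorem theorem3 (f : R -> R) (a b : R) :
  pdf_on f a b -> condA f a b -> condB f a b ->
  filterlim
    (fun delta =>
       AoI_opt f (uni_quantizer a b delta)
       - AoI_best f a b (distortion f (uni_quantizer a b delta)))
    (at_right 0) (locally 0).
Proof.
  intros Hpdf HA _. pose proof (pdf_cont_density f a b Hpdf HA) as Hg.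
  apply filterlim_locally. intros [eps Heps].
  pose proof (at_right_0_lt 1 Rlt_0_1) as Hpos.
  pose proof (uni_AoI_opt_le_eventually f a b Hg (eps / 3) ltac:(lra)) as Hup.
  pose proof (quantizer_AoI_opt_ge_eventually f a b Hg (eps / 3) ltac:(lra)) as Hlow.
  generalize (filter_and _ _ Hpos (filter_and _ _ Hup Hlow)).
  apply filter_imp. intros delta [[Hd _] [HUup HUlow]].
  set (U := uni_quantizer a b delta) in *.
  destruct (Glb_Rbar_real_bounds
              (fun y => exists Q, is_quantizer a b Q /\ distortion f Q <= distortion f U /\
                                  y = AoI_opt f Q)
              (3/2 * (uni_entropy (clamp_ext f a b) a b delta / ln 2) - eps / 3) (AoI_opt f U))
    as [Hbest_ge Hbest_le].
  - exists U. split; [apply uni_quantizer_valid; [apply Hg | exact Hd] |].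
    split; [apply Rle_refl | reflexivity].
  - intros z [Q [HQ [HDQ ->]]]. now apply HUlow.
  - apply ball_R. unfold AoI_best. simpl. rewrite Rminus_0_r, Rabs_right; lra.
Qed.
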